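(* Let $G$ be a group with a conjugation-closed generating set $X$ and let $g\in\mathrm{Mon}(X)$. The interval complex $K_g$ of the interval $[1,g]$ is isometric to the space $\mathrm{WFact}(G,g,\mathbf S)$ of weighted circular factorizations of $g$.
   Context: $\mathrm{Mon}(X)$ is the generated submonoid; $\ell(x)$ is the minimal length of a product of elements of $X$ equal to $x$; $x\le y$ if there is $x'\in\mathrm{Mon}(X)$ with $xx'=y$ and $\ell(x)+\ell(x')=\ell(y)$; $[1,g]=\{x:x\le g\}$, of height $n=\ell(g)$. $O_g$ is the order complex of $[1,g]$ with the orthoscheme metric: each maximal simplex (maximal chain $x_0<\cdots<x_n$) is the standard orthoscheme $\{0\le y_1\le\cdots\le y_n\le1\}\subset\mathbb R^n$ with $x_i$ at the vertex whose last $i$ coordinates are $1$. $K_g$ is the quotient metric space of $O_g$ obtained by identifying, via the order-preserving affine isometry, the simplices of chains $x_0<\cdots<x_k$ and $y_0<\cdots<y_k$ whenever $x_{i-1}^{-1}x_i=y_{i-1}^{-1}y_i$ for all $1\le i\le k$. A linear factorization of $g$ is $[x_L\ x_1\cdots x_k\ x_R]$ with entries in $\mathrm{Mon}(X)$, $x_1,\dots,x_k\ne1$, lengths summing to $\ell(g)$, product $g$. A weighted linear factorization of $g$ is a function $\mathbf u\colon[0,1]\to G$, trivial at all but finitely many points, such that with $0<s_1<\dots<s_k<1$ the points of $(0,1)$ where $\mathbf u$ is nontrivial, $P(\mathbf u)=[\mathbf u(0)\ \mathbf u(s_1)\cdots\mathbf u(s_k)\ \mathbf u(1)]$ is a linear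 factorization of $g$; write $0^{x_L}s_1^{x_1}\cdots s_k^{x_k}1^{x_R}$. The space $\mathrm{WFact}(G,g,\mathbf I)$ of these is a piecewise-Euclidean complex: via $\mathbf u\mapsto\ell\circ\mathbf u$ each cell $\{\mathbf u:P(\mathbf u)=\mathbf x\}$ is identified with an open face of the orthoscheme $\{0\le y_1\le\cdots\le y_n\le1\}$ in which a multiset of $n$ points of $[0,1]$, listed in nondecreasing order, is a point; the metric is pulled back. $\mathrm{WFact}(G,g,\mathbf S)$ is the quotient of $\mathrm{WFact}(G,g,\mathbf I)$ identifying (isometrically, cell by cell) $0^{x_L}s_1^{x_1}\cdots s_k^{x_k}1^{x_R}$ with $0^{y_L}s_1^{y_1}\cdots s_k^{y_k}1^{y_R}$ whenever $x_i=y_i$ for all $1\le i\le k$; it carries the quotient metric. *)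

From Stdlib Require Import Reals List ClassicalEpsilon.
From Coquelicot Require Import Coquelicot.
Import ListNotations.
Set Implicit Arguments.
Open Scope R_scope.

Record group := Group {
  gcar :> Type;
  gmul : gcar -> gcar -> gcar;
  gone : gcar;
  ginv : gcar -> gcar;
  gmulA : forall a b c, gmul a (gmul b c) = gmul (gmul a b) c;
  gmul1l : forall a, gmul gone a = a;
  gmul1r : forall a, gmul a gone = a;
  gmulVl : forall a, gmul (ginv a) a = gone;
  gmulVr : forall a, gmul a (ginv a) = gone }.
Arguments gmul {g} _ _.
Arguments ginv {g} _.
Arguments gone {g}.

Definition lsum {A : Type} (f : A -> R) (l : list A) : R :=
  fold_right (fun a acc => f a + acc) 0 l.
Definition nsum {A : Type} (f : A -> nat) (l : list A) : nat :=
  fold_right (fun a acc => (f a + acc)%nat) 0%nat l.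

Definition edist_list (a b : list R) : R :=
  sqrt (lsum (fun p => (fst p - snd p) ^ 2) (combine a b)).

(** [L a b r]: a and b lie in a common closed cell, at Euclidean distance r in it. *)
Inductive lpath {P : Type} (L : P -> P -> R -> Prop) : P -> P -> R -> Prop :=
  | lpath_nil a : lpath L a a 0
  | lpath_cons a b c r r' : L a b r -> lpath L b c r' -> lpath L a c (r + r').

Definition qlink {P : Type} (L : P -> P -> R -> Prop) (I : P -> P -> Prop)
  (a b : P) (r : R) : Prop := L a b r \/ (I a b /\ r = 0).

(** quotient (by I) of the intrinsic length pseudometric of the complex (P, L) *)
Definition qdist {P : Type} (L : P -> P -> R -> Prop) (I : P -> P -> Prop)
  (a b : P) : Rbar := Glb_Rbar (fun r => lpath (qlink L I) a b r).

(** isometry of the associated metric spaces (points at distance 0 identified) *)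
Definition isometric {A B : Type} (dA : A -> A -> Rbar) (dB : B -> B -> Rbar) : Prop :=
  exists f : A -> B,
    (forall a a', dB (f a) (f a') = dA a a') /\
    (forall b, exists a, dB (f a) b = Finite 0).

Section GroupDefs.
Variable G : group.
Variable X : G -> Prop.
Variable g : G.

Definition wprod (l : list G) : G := fold_right (@gmul G) (@gone G) l.

Definition generates : Prop :=
  forall y : G, exists l, List.Forall (fun z => X z \/ X (ginv z)) l /\ wprod l = y.

Definition conj_closed : Prop :=
  forall x h : G, X x -> X (gmul (ginv h) (gmul x h)).

Definition Mon (x : G) : Prop := exists l, List.Forall X l /\ wprod l = x.

Definition is_len (x : G) (n : nat) : Prop :=
  (exists l, List.Forall X l /\ wprod l = x /\ length l = n) /\
  (forall l, List.Forall X l -> wprod l = x -> (n <= length l)%nat).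

Definition ell (x : G) : nat := epsilon (inhabits 0%nat) (is_len x).

Definition le (x y : G) : Prop :=
  Mon x /\ exists x', Mon x' /\ gmul x x' = y /\ (ell x + ell x' = ell y)%nat.
Definition lt (x y : G) : Prop := le x y /\ x <> y.

Definition inI (x : G) : Prop := le x g.

Definition chain_list (s : list G) : Prop :=
  NoDup s /\ List.Forall inI s /\ (forall x y, In x s -> In y s -> le x y \/ le y x).

Definition carries (s : list G) (p : G -> R) : Prop := forall x, p x <> 0 -> In x s.

(** a point of O_g: barycentric weights supported on a chain of [1,g] *)
Definition Opt (p : G -> R) : Prop :=
  (forall x, 0 <= p x) /\
  exists s, chain_list s /\ carries s p /\ lsum p s = 1.

Definition OPoint : Type := { p : G -> R | Opt p }.

(** Euclidean coordinate j (0-indexed, j < n = ell g): vertex x sits at the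
    point whose last ell x coordinates are 1 *)
Definition ocoord (s : list G) (p : G -> R) (j : nat) : R :=
  lsum (fun x => if Nat.leb (ell g - ell x) j then p x else 0) s.

Definition ostep (p q : OPoint) (r : R) : Prop :=
  exists s, chain_list s /\ carries s (proj1_sig p) /\ carries s (proj1_sig q) /\
    r = sqrt (lsum (fun j => (ocoord s (proj1_sig p) j - ocoord s (proj1_sig q) j) ^ 2)
                   (seq 0 (ell g))).

Definition strict_chain (c : list G) : Prop :=
  List.Forall inI c /\
  forall i, (S i < length c)%nat -> lt (nth i c (@gone G)) (nth (S i) c (@gone G)).

Definition kident (p q : OPoint) : Prop :=
  exists c d : list G,
    strict_chain c /\ strict_chain d /\ length c = length d /\
    (forall i, (S i < length c)%nat ->
        gmul (ginv (nth i c (@gone G))) (nth (S i) c (@gone G)) =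
        gmul (ginv (nth i d (@gone G))) (nth (S i) d (@gone G))) /\
    carries c (proj1_sig p) /\ carries d (proj1_sig q) /\
    (forall i, (i < length c)%nat ->
        proj1_sig p (nth i c (@gone G)) = proj1_sig q (nth i d (@gone G))).

Definition K_dist : OPoint -> OPoint -> Rbar := qdist ostep kident.

Definition lin_fact (xL : G) (xs : list G) (xR : G) : Prop :=
  Mon xL /\ List.Forall Mon xs /\ List.Forall (fun x => x <> @gone G) xs /\ Mon xR /\
  (ell xL + nsum ell xs + ell xR = ell g)%nat /\
  gmul xL (gmul (wprod xs) xR) = g.

(** u : [0,1] -> G, represented as a function on R trivial outside [0,1] *)
Definition WF (u : R -> G) : Prop :=
  (forall s, (s < 0 \/ 1 < s) -> u s = @gone G) /\
  exists ss : list R,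
    (forall i, (S i < length ss)%nat -> nth i ss 0 < nth (S i) ss 0) /\
    List.Forall (fun s => 0 < s < 1) ss /\
    (forall s, 0 < s < 1 -> (u s <> @gone G <-> In s ss)) /\
    lin_fact (u 0) (map u ss) (u 1).

Definition WPoint : Type := { u : R -> G | WF u }.

(** the point of the closed cell of [xL xs xR] given by positions t of the
    factors xs (factors at equal positions multiplied in order) *)
Definition place (xL : G) (xs : list G) (xR : G) (t : list R) : R -> G :=
  fun s =>
    let at_s := wprod (map fst (filter (fun p => if Req_EM_T (snd p) s then true else false)
                                       (combine xs t))) in
    if Req_EM_T s 0 then gmul xL at_s
    else if Req_EM_T s 1 then gmul at_s xR
    else if Rlt_dec 0 s then (if Rlt_dec s 1 then at_s else @gone G) else @gone G.

Definition positions (xs : list G) (t : list R) : Prop :=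
  length t = length xs /\ List.Forall (fun s => 0 <= s <= 1) t /\
  (forall i, (S i < length t)%nat -> nth i t 0 <= nth (S i) t 0).

(** the multiset of n points ell o u, listed in nondecreasing order *)
Definition wcoords (xL : G) (xs : list G) (xR : G) (t : list R) : list R :=
  repeat 0 (ell xL) ++
  concat (map (fun p => repeat (snd p) (ell (fst p))) (combine xs t)) ++
  repeat 1 (ell xR).

Definition wstep (u v : WPoint) (r : R) : Prop :=
  exists xL xs xR t t',
    lin_fact xL xs xR /\ positions xs t /\ positions xs t' /\
    proj1_sig u = place xL xs xR t /\ proj1_sig v = place xL xs xR t' /\
    r = edist_list (wcoords xL xs xR t) (wcoords xL xs xR t').

(** WFact(G,g,S): identify factorizations agreeing on (0,1) *)
Definition wident (u v : WPoint) : Prop :=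
  forall s, 0 < s < 1 -> proj1_sig u s = proj1_sig v s.

Definition WS_dist : WPoint -> WPoint -> Rbar := qdist wstep wident.

End GroupDefs.

(* A point of the order complex O_g is a probability vector p on a chain c_0 < ... < c_k of [1,g].
   Reading the chain as the linear factorization [c_0 | c_0^-1 c_1 | ... | c_(k-1)^-1 c_k | c_k^-1 g]
   and placing the i-th inner factor at the cumulative weight p(c_0) + ... + p(c_(i-1)) gives a
   weighted factorization; conversely, the weights are the gaps between consecutive positions.
   Absorbing the factors placed at 0 or 1 into the outer ones and multiplying factors placed at the
   same point gives every point a unique normal form, so this is a bijection between the points of
   O_g and of WFact(G,g,I).  On a common cell the orthoscheme coordinates of the chain point are the
   complements, in reverse order, of the sorted multiset ell o u, so cell steps have the same length
   on both sides; and the identifications defining K_g (same successive quotients and weights) are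
   exactly those defining WFact(G,g,S) (same factors on (0,1)).  Hence the two quotient length
   pseudometrics agree. *)

From Stdlib Require Import Reals List Lia Lra Permutation Sorted.
From Stdlib Require Import ClassicalEpsilon FunctionalExtensionality ProofIrrelevance PropExtensionality.
From Coquelicot Require Import Coquelicot.
Import ListNotations.
Open Scope R_scope.

Lemma lsum_nil {A} (f : A -> R) : lsum f [] = 0.
Proof. reflexivity. Qed.

Lemma lsum_cons {A} (f : A -> R) a l : lsum f (a :: l) = f a + lsum f l.
Proof. reflexivity. Qed.

Lemma lsum_app {A} (f : A -> R) l1 l2 : lsum f (l1 ++ l2) = lsum f l1 + lsum f l2.
Proof. induction l1; cbn [app]; rewrite ?lsum_cons, ?lsum_nil; [ring|]. rewrite IHl1; ring. Qed.

Lemma lsum_ext_in {A} (f h : A -> R) l : (forall x, In x l -> f x = h x) -> lsum f l = lsum h l.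
Proof.
  induction l; intros H. reflexivity. rewrite !lsum_cons. rewrite H by (left; auto). rewrite IHl.
  reflexivity. intros; apply H; right; auto.
Qed.

Lemma lsum_perm {A} (f : A -> R) l1 l2 : Permutation l1 l2 -> lsum f l1 = lsum f l2.
Proof.
  induction 1. reflexivity. rewrite !lsum_cons, IHPermutation; reflexivity. rewrite !lsum_cons; ring.
  rewrite IHPermutation1; auto.
Qed.

Lemma lsum_minus {A} (f h : A -> R) l : lsum (fun x => f x - h x) l = lsum f l - lsum h l.
Proof. induction l; rewrite ?lsum_cons, ?lsum_nil; [ring|]. rewrite IHl; ring. Qed.

Lemma lsum_nonneg {A} (f : A -> R) l : (forall x, In x l -> 0 <= f x) -> 0 <= lsum f l.
Proof.
  induction l; intros H; rewrite ?lsum_cons, ?lsum_nil; [lra|]. pose proof (H a (or_introl eq_refl)).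
  pose proof (IHl (fun x Hx => H x (or_intror Hx))). lra.
Qed.

Lemma lsum_map {A B} (f : B -> R) (h : A -> B) l : lsum f (map h l) = lsum (fun x => f (h x)) l.
Proof. induction l; cbn [map]; rewrite ?lsum_cons, ?lsum_nil; auto. rewrite IHl; auto. Qed.

Lemma lsum_zero {A} (f : A -> R) l : (forall x, In x l -> f x = 0) -> lsum f l = 0.
Proof.
  intros H. rewrite (lsum_ext_in f (fun _ => 0)); auto. induction l; rewrite ?lsum_cons, ?lsum_nil; auto.
  rewrite IHl; [ring|]. intros; apply H; simpl; auto.
Qed.

Lemma lsum_rev_seq (h : nat -> R) n : lsum (fun j => h (n - 1 - j)%nat) (seq 0 n) = lsum h (seq 0 n).
Proof.
  induction n. reflexivity.
  transitivity (h n + lsum h (seq 0 n)).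
  - change (seq 0 (S n)) with (0%nat :: seq 1 n). rewrite lsum_cons.
    rewrite <- seq_shift, lsum_map. rewrite <- IHn.
    replace (S n - 1 - 0)%nat with n by lia. f_equal. apply lsum_ext_in. intros x _. f_equal. lia.
  - rewrite seq_S, lsum_app, lsum_cons, lsum_nil. rewrite Nat.add_0_l. ring.
Qed.

Lemma lsum_filter_nonzero {A} (p : A -> R) s :
  lsum p s = lsum p (filter (fun x => if Req_dec_T (p x) 0 then false else true) s).
Proof.
  induction s as [|a s IH]. reflexivity. cbn [filter]. rewrite lsum_cons.
  destruct (Req_dec_T (p a) 0) as [E|E]. rewrite E, IH; ring. rewrite lsum_cons, IH; auto.
Qed.

Lemma map_seq_const {A} (f : nat -> A) (x : A) a n : (forall k, (a <= k < a + n)%nat -> f k = x) ->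
  map f (seq a n) = repeat x n.
Proof.
  revert a; induction n; intros a H; simpl; auto. rewrite H by lia. f_equal. apply IHn.
  intros; apply H; lia.
Qed.

Lemma seq_shift_add c n : seq c n = map (Nat.add c) (seq 0 n).
Proof.
  revert c; induction n; intros c; simpl; auto. rewrite Nat.add_0_r. f_equal.
  rewrite (IHn (S c)), <- seq_shift, map_map. apply map_ext; intros; lia.
Qed.

Lemma combine_map_seq {A B C} (f : A -> B) (h : A -> C) l : combine (map f l) (map h l) = map (fun k => (f k, h k)) l.
Proof. induction l; simpl; auto. f_equal; auto. Qed.

Lemma combine_map_l {A B C} (f : A -> C) (l1 : list A) (l2 : list B) :
  combine (map f l1) l2 = map (fun p => (f (fst p), snd p)) (combine l1 l2).
Proof. revert l2; induction l1; intros [|b l2]; simpl; auto. f_equal; auto. Qed.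

Lemma combine_app_eq_length {A B} (l1 l2 : list A) (m1 m2 : list B) : length l1 = length m1 ->
  combine (l1 ++ l2) (m1 ++ m2) = combine l1 m1 ++ combine l2 m2.
Proof. revert m1; induction l1; intros [|b m1] H; simpl in *; try discriminate; auto. f_equal; auto. Qed.

Lemma nth_pair_split {A B} (l : list (A * B)) i a b :
  nth i l (a, b) = (nth i (map fst l) a, nth i (map snd l) b).
Proof. revert i; induction l as [|[x y] l IH]; intros [|i]; simpl; auto. Qed.

Lemma in_combine_r_inv {A B} (xs : list A) (t : list B) s : length xs = length t -> In s t ->
  exists x, In (x, s) (combine xs t).
Proof.
  revert t; induction xs as [|x xs IH]; intros [|a t] Hl Hi; simpl in *; try discriminate;
      try contradiction.
  destruct Hi as [->|Hi]. exists x; left; auto.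
  destruct (IH t ltac:(lia) Hi) as [y Hy]. exists y; right; auto.
Qed.

Lemma length_app_split {A B} (xs : list A) (t1 t2 : list B) : length xs = length (t1 ++ t2) ->
  exists xs1 xs2, xs = xs1 ++ xs2 /\ length xs1 = length t1 /\ length xs2 = length t2.
Proof.
  intros H. rewrite length_app in H. exists (firstn (length t1) xs), (skipn (length t1) xs).
  rewrite firstn_skipn, length_firstn, length_skipn. repeat split; lia.
Qed.

Lemma Sorted_nth_iff {A} (Rr : A -> A -> Prop) (t : list A) d :
  (forall i, (S i < length t)%nat -> Rr (nth i t d) (nth (S i) t d)) <-> Sorted Rr t.
Proof.
  induction t as [|a t IH]; split.
  - constructor.
  - intros _ i Hi; simpl in Hi; lia.
  - intros H. constructor.
    + apply IH. intros i Hi. apply (H (S i)). simpl; lia.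
    + destruct t as [|b t]; constructor. apply (H 0%nat). simpl; lia.
  - intros H. apply Sorted_inv in H as [H1 H2]. intros i Hi. destruct i.
    + destruct t as [|b t]. simpl in Hi; lia. apply HdRel_inv in H2. exact H2.
    + apply IH; auto. simpl in Hi; lia.
Qed.

Lemma StronglySorted_nth {A} (Rr : A -> A -> Prop) (l : list A) d i : StronglySorted Rr l ->
  (S i < length l)%nat ->
  Rr (nth i l d) (nth (S i) l d).
Proof.
  intros H. revert i; induction H as [|a l S IH F]; intros i Hi. simpl in Hi; lia.
  destruct i. destruct l as [|b l]. simpl in Hi; lia. simpl. inversion F; auto.
  simpl. apply IH. simpl in Hi; lia.
Qed.

Lemma Sorted_Rle_Forall (s : R) t : Sorted Rle (s :: t) -> List.Forall (fun u => s <= u) t.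
Proof.
  intros H. apply Sorted_StronglySorted in H. inversion H; auto.
  intros a b c; apply Rle_trans.
Qed.

Lemma Sorted_Rlt_NoDup t : Sorted Rlt t -> NoDup t.
Proof.
  intros H. apply Sorted_StronglySorted in H; [|intros a b c; apply Rlt_trans].
  induction H; constructor; auto. intro Hi. rewrite Forall_forall in H0. specialize (H0 a Hi). lra.
Qed.

Lemma Sorted_app_l {A} (Rr : A -> A -> Prop) l1 l2 : Sorted Rr (l1 ++ l2) -> Sorted Rr l1.
Proof.
  induction l1 as [|a l1 IH]; intros H. constructor.
  simpl in H. apply Sorted_inv in H as [H1 H2]. constructor. auto.
  destruct l1; constructor. simpl in H2. apply HdRel_inv in H2; auto.
Qed.

Lemma Sorted_dedup {A} (Rr : A -> A -> Prop) t1 a t2 : Sorted Rr (t1 ++ a :: a :: t2) ->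
  Sorted Rr (t1 ++ a :: t2).
Proof.
  induction t1 as [|b t1 IH]; intros H; simpl in *.
  - apply Sorted_inv in H; tauto.
  - apply Sorted_inv in H as [H1 H2]. constructor. auto.
    destruct t1; simpl in *; apply HdRel_inv in H2; constructor; auto.
Qed.

Lemma StronglySorted_app_rel {A} (Rr : A -> A -> Prop) l1 l2 : StronglySorted Rr (l1 ++ l2) ->
  forall x y, In x l1 -> In y l2 -> Rr x y.
Proof.
  induction l1 as [|a l1 IH]; intros H x y Hx Hy. destruct Hx.
  simpl in H. inversion H; subst. destruct Hx as [->|Hx].
  rewrite Forall_forall in H3. apply H3, in_or_app; auto. apply IH; auto.
Qed.

Lemma StronglySorted_unique {A} (Rr : A -> A -> Prop) (l1 l2 : list A) :
  (forall x, ~ Rr x x) -> (forall x y, Rr x y -> ~ Rr y x) ->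
  StronglySorted Rr l1 -> StronglySorted Rr l2 -> (forall x, In x l1 <-> In x l2) -> l1 = l2.
Proof.
  intros Irr Asy S1. revert l2. induction S1 as [|a l1 S1 IH F1]; intros l2 S2 E.
  - destruct l2 as [|b l2]; auto. exfalso. apply (E b). left; auto.
  - destruct S2 as [|b l2 S2 F2]. exfalso. apply (E a). left; auto.
    assert (a = b).
    { destruct (proj1 (E a) (or_introl eq_refl)) as [->|H1]; auto.
      destruct (proj2 (E b) (or_introl eq_refl)) as [->|H2]; auto.
      rewrite Forall_forall in F1, F2. exfalso. apply (Asy a b); auto. }
    subst b. f_equal. apply IH; auto. rewrite Forall_forall in F1, F2. intros x; split; intros Hx.
    + destruct (proj1 (E x) (or_intror Hx)) as [->|H]; auto. exfalso; apply (Irr x); auto.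
    + destruct (proj2 (E x) (or_intror Hx)) as [->|H]; auto. exfalso; apply (Irr x); auto.
Qed.

Lemma Sorted_Rlt_no_repeat t : Sorted Rle t -> (forall t1 a t2, t <> t1 ++ a :: a :: t2) -> Sorted Rlt t.
Proof.
  induction t as [|a t IH]; intros H N. constructor.
  apply Sorted_inv in H as [H1 H2]. constructor.
  - apply IH; auto. intros t1 b t2 E. apply (N (a :: t1) b t2). rewrite E; auto.
  - destruct t as [|b t]; constructor. apply HdRel_inv in H2. destruct (Req_dec a b) as [<-|]; [|lra].
    exfalso; apply (N [] a t); auto.
Qed.

Lemma Forall_open_unit t : Sorted Rle t -> List.Forall (fun s => 0 <= s <= 1) t ->
  (forall t0, t <> 0 :: t0) -> (forall t0, t <> t0 ++ [1]) -> List.Forall (fun s => 0 < s < 1) t.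
Proof.
  intros HS HF N0 N1. apply Sorted_StronglySorted in HS; [|intros a b c; apply Rle_trans].
  rewrite Forall_forall in *. intros s Hs. pose proof (HF s Hs). split.
  - destruct t as [|a t]; [destruct Hs|].
    assert (a <= s) by (destruct Hs as [->|Hs]; [lra|]; inversion HS; rewrite Forall_forall in *; auto).
    assert (a <> 0) by (intros ->; exact (N0 t eq_refl)). pose proof (HF a (or_introl eq_refl)). lra.
  - destruct (exists_last (l := t) ltac:(intros ->; destruct Hs)) as [t0 [z Ez]].
    rewrite Ez in Hs, HS, HF.
    assert (z <> 1) by (intros ->; exact (N1 t0 Ez)).
    assert (Hz : In z (t0 ++ [z])) by (apply in_or_app; right; left; auto). pose proof (HF z Hz).
    apply in_app_or in Hs as [Hs|[<-|[]]]; [|lra].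
    pose proof (StronglySorted_app_rel Rle t0 [z] HS s z Hs (or_introl eq_refl)). lra.
Qed.

Fixpoint insert_by {A} (k : A -> nat) (x : A) (l : list A) : list A :=
  match l with
  | [] => [x]
  | y :: l' => if Nat.leb (k x) (k y) then x :: y :: l' else y :: insert_by k x l'
  end.

Lemma Permutation_insert_by {A} (k : A -> nat) x l : Permutation (x :: l) (insert_by k x l).
Proof.
  induction l as [|y l IH]; simpl. auto.
  destruct (Nat.leb (k x) (k y)). auto.
  eapply perm_trans. apply perm_swap. constructor. auto.
Qed.

Lemma Sorted_insert_by {A} (k : A -> nat) x l :
  Sorted (fun a b => (k a <= k b)%nat) l -> Sorted (fun a b => (k a <= k b)%nat) (insert_by k x l).
Proof.
  induction 1 as [|y l S IH F]; simpl. repeat constructor.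
  destruct (Nat.leb (k x) (k y)) eqn:E.
  - constructor; auto. constructor. apply Nat.leb_le; auto.
  - apply Nat.leb_gt in E. constructor; auto.
    destruct l as [|z l]; simpl. constructor; lia.
    destruct (Nat.leb (k x) (k z)); constructor. lia. inversion F; auto.
Qed.

Lemma sort_by_key {A} (k : A -> nat) (s : list A) :
  exists y, Permutation s y /\ Sorted (fun a b => (k a <= k b)%nat) y.
Proof.
  induction s as [|x s [y [P S]]]. exists []; split; constructor.
  exists (insert_by k x y). split. eapply perm_trans. apply perm_skip, P. apply Permutation_insert_by.
  apply Sorted_insert_by; auto.
Qed.

Fixpoint partial_sums (acc : R) (ws : list R) : list R :=
  match ws with
  | w :: ((_ :: _) as ws') => (acc + w) :: partial_sums (acc + w) ws'
  | _ => []
  end.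

Lemma length_partial_sums acc w ws : length (partial_sums acc (w :: ws)) = length ws.
Proof.
  revert acc w; induction ws; intros acc w; [reflexivity|]. specialize (IHws (acc + w) a). simpl in *.
  rewrite IHws. reflexivity.
Qed.

Lemma partial_sums_sorted acc ws : List.Forall (fun w => 0 <= w) ws ->
  Sorted Rle (acc :: partial_sums acc ws).
Proof.
  revert acc; induction ws as [|w ws IH]; intros acc F. repeat constructor.
  destruct ws as [|w' ws]. repeat constructor.
  inversion F; subst.
  change (partial_sums acc (w :: w' :: ws)) with ((acc + w) :: partial_sums (acc + w) (w' :: ws)).
  constructor. apply IH; auto. constructor. lra.
Qed.

Lemma partial_sums_upper acc ws : List.Forall (fun w => 0 <= w) ws ->
  List.Forall (fun s => s <= acc + lsum (fun r => r) ws) (partial_sums acc ws).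
Proof.
  revert acc; induction ws as [|w ws IH]; intros acc F. constructor.
  destruct ws as [|w' ws]. constructor.
  inversion F; subst.
  change (partial_sums acc (w :: w' :: ws)) with ((acc + w) :: partial_sums (acc + w) (w' :: ws)).
  assert (0 <= lsum (fun r => r) (w' :: ws)) by (apply lsum_nonneg; intros;
      rewrite Forall_forall in H2; auto).
  rewrite lsum_cons. constructor. lra.
  eapply Forall_impl; [|apply IH; auto]. simpl; intros; lra.
Qed.

Lemma partial_sums_unit ws : List.Forall (fun w => 0 <= w) ws -> lsum (fun r => r) ws = 1 ->
  List.Forall (fun s => 0 <= s <= 1) (partial_sums 0 ws) /\ Sorted Rle (partial_sums 0 ws).
Proof.
  intros F Hs. pose proof (partial_sums_upper 0 ws F) as U. pose proof (partial_sums_sorted 0 ws F) as L.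
  split.
  - apply Sorted_StronglySorted in L; [|intros a b c; apply Rle_trans].
    apply StronglySorted_inv in L as [_ L].
    rewrite Forall_forall in *. intros s Hs'. specialize (U s Hs'). specialize (L s Hs'). lra.
  - apply Sorted_inv in L; tauto.
Qed.

Definition weight_of {A} (l : list (A * R)) (x : A) : R :=
  fold_right (fun p acc => (if excluded_middle_informative (x = fst p) then snd p else 0) + acc) 0 l.

Lemma weight_of_cons {A} (x a : A) q l : weight_of ((a, q) :: l) x =
  (if excluded_middle_informative (x = a) then q else 0) + weight_of l x.
Proof. reflexivity. Qed.

Lemma weight_of_notin {A} (l : list (A * R)) x : ~ In x (map fst l) -> weight_of l x = 0.
Proof.
  induction l as [|[a q] l IH]; intros H. reflexivity.
  rewrite weight_of_cons. cbn [map fst] in H. destruct (excluded_middle_informative (x = a)) as [E|E].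
  exfalso; apply H; left; auto. rewrite IH. ring. intro; apply H; right; auto.
Qed.

Lemma weight_of_at {A} (l : list (A * R)) a q : NoDup (map fst l) -> In (a, q) l -> weight_of l a = q.
Proof.
  induction l as [|[b r] l IH]; intros ND Hi; cbn [map fst In] in *. destruct Hi.
  inversion ND; subst. rewrite weight_of_cons. destruct Hi as [E|Hi].
  - injection E; intros; subst. destruct (excluded_middle_informative (a = a)); [|congruence].
    rewrite weight_of_notin; auto. ring.
  - destruct (excluded_middle_informative (a = b)). subst. exfalso. apply H1. apply (in_map fst) in Hi.
    exact Hi.
    rewrite IH; auto. ring.
Qed.

Lemma weight_of_support {A} (l : list (A * R)) x : weight_of l x <> 0 -> In x (map fst l).
Proof.
  intros H. destruct (classic (In x (map fst l))); auto. exfalso; apply H, weight_of_notin; auto.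
Qed.

Lemma weight_of_nonneg {A} (l : list (A * R)) x : List.Forall (fun p => 0 <= snd p) l ->
  0 <= weight_of l x.
Proof.
  induction 1 as [|[a q] l H F IH]. unfold weight_of; simpl; lra.
  rewrite weight_of_cons. simpl in H. destruct (excluded_middle_informative (x = a)); lra.
Qed.

Lemma lsum_weight_of {A} (f : A -> R) (l : list (A * R)) : NoDup (map fst l) ->
  lsum (fun x => f x * weight_of l x) (map fst l) = lsum (fun p => f (fst p) * snd p) l.
Proof.
  induction l as [|[a q] l IH]; intros ND; cbn [map fst] in *; auto.
  inversion ND; subst. rewrite !lsum_cons. cbn [fst snd]. rewrite weight_of_cons.
  destruct (excluded_middle_informative (a = a)) as [_|N]; [|congruence].
  rewrite (weight_of_notin l a H1).
  rewrite <- IH; auto. f_equal. ring.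
  apply lsum_ext_in. intros x Hx. rewrite weight_of_cons. destruct (excluded_middle_informative (x = a)).
  subst; contradiction. ring.
Qed.

Lemma weight_of_graph_notin {A} (p : A -> R) l x : ~ In x l ->
  weight_of (map (fun y => (y, p y)) l) x = 0.
Proof.
  induction l; simpl; intros H; auto. unfold weight_of in *; simpl.
  destruct (excluded_middle_informative (x = a)). exfalso; apply H; auto. rewrite IHl; auto. lra.
Qed.

Lemma weight_of_graph_in {A} (p : A -> R) l x : NoDup l -> In x l ->
  weight_of (map (fun y => (y, p y)) l) x = p x.
Proof.
  induction 1; intros Hi. destruct Hi.
  cbn [map]. rewrite weight_of_cons.
  match goal with
  | |- context [excluded_middle_informative (?a = ?b)] => destruct (excluded_middle_informative (a = b)) as [E|E]
  end.
  - subst. rewrite weight_of_graph_notin; auto. lra.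
  - destruct Hi as [Hi|Hi]. subst; congruence. rewrite IHNoDup; auto. lra.
Qed.

Lemma weight_of_graph {A} (p : A -> R) l : NoDup l -> (forall x, p x <> 0 -> In x l) ->
  weight_of (map (fun y => (y, p y)) l) = p.
Proof.
  intros ND C. apply functional_extensionality; intros x.
  destruct (classic (In x l)). apply weight_of_graph_in; auto.
  rewrite weight_of_graph_notin; auto. destruct (Req_dec (p x) 0); auto. exfalso; apply H, C; auto.
Qed.

Lemma graph_weight_of {A} (l : list (A * R)) : NoDup (map fst l) ->
  l = map (fun x => (x, weight_of l x)) (map fst l).
Proof.
  intros ND. rewrite map_map. rewrite <- (map_id l) at 1. apply map_ext_in.
  intros [a q] Hin. simpl. f_equal. symmetry. apply weight_of_at; auto.
Qed.

Lemma in_weight_of_pos {A} (l : list (A * R)) x : NoDup (map fst l) ->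
  List.Forall (fun p => 0 < snd p) l ->
  (In x (map fst l) <-> 0 < weight_of l x).
Proof.
  intros ND F. split.
  - intros Hi. apply in_map_iff in Hi as [[a q] [E Hi]]. simpl in E; subst a.
    rewrite (weight_of_at l x q ND Hi). rewrite Forall_forall in F. apply (F _ Hi).
  - intros H. apply weight_of_support. lra.
Qed.

Lemma weight_of_nth {A} (l : list (A * R)) i d : NoDup (map fst l) -> (i < length l)%nat ->
  weight_of l (nth i (map fst l) d) = nth i (map snd l) 0.
Proof.
  intros ND Hi. apply weight_of_at; auto. rewrite <- nth_pair_split. apply nth_In; auto.
Qed.

Fixpoint nat_gap_weights (c : nat) (v : R) (ls : list nat) (t : list R) : list (nat * R) :=
  match ls, t with
  | l :: ls', s :: t' => (c, s - v) :: nat_gap_weights (c + l) s ls' t'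
  | _, _ => [(c, 1 - v)]
  end.

Definition indicator (b : bool) (w : R) : R := if b then w else 0.

Lemma nat_gap_weights_lb c v ls t : List.Forall (fun pr => (c <= fst pr)%nat) (nat_gap_weights c v ls t).
Proof.
  revert c v t; induction ls; intros c v t; destruct t; simpl; constructor; simpl; auto.
  eapply Forall_impl; [|apply IHls]. simpl; intros; lia.
Qed.

Lemma nat_gap_weights_shift c l v ls t : nat_gap_weights (c + l) v ls t =
  map (fun pr => (c + fst pr, snd pr)%nat) (nat_gap_weights l v ls t).
Proof.
  revert l v t; induction ls; intros l v t; destruct t; simpl; auto.
  f_equal. rewrite <- IHls. f_equal. lia.
Qed.

Definition step_sum (l : list (nat * R)) (k : nat) : R :=
  lsum (fun pr => indicator (Nat.leb (fst pr) k) (snd pr)) l.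

(* The k-th point of the sorted multiset is v plus the gaps of the blocks starting at or before k. *)
Lemma repeats_step_sum c v ls t cR : length t = length ls ->
  repeat v c ++ concat (map (fun p => repeat (snd p) (fst p)) (combine ls t)) ++ repeat 1 cR =
  map (fun k => v + step_sum (nat_gap_weights c v ls t) k) (seq 0 (c + list_sum ls + cR)).
Proof.
  revert c v t; induction ls as [|l ls IH]; intros c v t Ht; destruct t as [|s t]; simpl in Ht;
      try discriminate.
  - cbn [nat_gap_weights combine map concat list_sum fold_right app].
    replace (c + 0 + cR)%nat with (c + cR)%nat by lia. rewrite seq_app, map_app. f_equal.
    + symmetry; apply map_seq_const. intros k Hk. unfold step_sum. rewrite lsum_cons, lsum_nil.
      cbn [fst snd].
      destruct (Nat.leb c k) eqn:E. apply Nat.leb_le in E; lia. unfold indicator; ring.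
    + symmetry; apply map_seq_const. intros k Hk. unfold step_sum. rewrite lsum_cons, lsum_nil.
      cbn [fst snd].
      destruct (Nat.leb c k) eqn:E. unfold indicator; ring. apply Nat.leb_gt in E; lia.
  - cbn [combine map concat nat_gap_weights]. rewrite <- app_assoc.
    specialize (IH l s t ltac:(lia)).
    replace (c + list_sum (l :: ls) + cR)%nat with (c + (l + list_sum ls + cR))%nat by (simpl; lia).
    rewrite seq_app, map_app. f_equal.
    + symmetry; apply map_seq_const. intros k Hk. unfold step_sum. rewrite lsum_cons. cbn [fst snd].
      destruct (Nat.leb c k) eqn:E. apply Nat.leb_le in E; lia.
      rewrite lsum_zero. unfold indicator; ring. intros pr Hpr.
      pose proof (nat_gap_weights_lb (c + l) s ls t) as F. rewrite Forall_forall in F.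
      specialize (F pr Hpr).
      destruct (Nat.leb (fst pr) k) eqn:E2. apply Nat.leb_le in E2; lia. reflexivity.
    + cbn [fst snd]. rewrite IH. rewrite (seq_shift_add (0 + c)), map_map. apply map_ext.
      intros k. unfold step_sum. rewrite lsum_cons. simpl fst. simpl snd.
      replace (Nat.leb c (0 + c + k)) with true by (symmetry; apply Nat.leb_le; lia).
      rewrite nat_gap_weights_shift, lsum_map. simpl.
      rewrite (lsum_ext_in (fun x => indicator (c + fst x <=? c + k)%nat (snd x)) (fun pr =>
          indicator (Nat.leb (fst pr) k) (snd pr))). ring.
      intros pr _. f_equal.
      destruct (Nat.leb (fst pr) k) eqn:E1; destruct (Nat.leb (c + fst pr) (c + k)) eqn:E2; auto;
      rewrite ?Nat.leb_le, ?Nat.leb_gt in E1; rewrite ?Nat.leb_le, ?Nat.leb_gt in E2; lia.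
Qed.

(** * Quotient length pseudometrics *)

Lemma lpath_map {P Q : Type} (L1 : P -> P -> R -> Prop) (I1 : P -> P -> Prop)
  (L2 : Q -> Q -> R -> Prop) (I2 : Q -> Q -> Prop) (f : P -> Q) :
  (forall a b r, L1 a b r -> L2 (f a) (f b) r) -> (forall a b, I1 a b -> I2 (f a) (f b)) ->
  forall a b r, lpath (qlink L1 I1) a b r -> lpath (qlink L2 I2) (f a) (f b) r.
Proof.
  intros HL HI a b r H. induction H. constructor.
  econstructor; [|exact IHlpath]. destruct H as [H|[H E]]. left; auto. right; auto.
Qed.

Lemma lpath_nonneg {P : Type} (L : P -> P -> R -> Prop) (I : P -> P -> Prop) :
  (forall a b r, L a b r -> 0 <= r) -> forall a b r, lpath (qlink L I) a b r -> 0 <= r.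
Proof.
  intros HL a b r H. induction H. lra. destruct H as [H|[_ E]]. pose proof (HL _ _ _ H); lra. lra.
Qed.

Lemma qdist_self {P : Type} (L : P -> P -> R -> Prop) (I : P -> P -> Prop) a :
  (forall a b r, L a b r -> 0 <= r) -> qdist L I a a = Finite 0.
Proof.
  intros HL. unfold qdist. apply is_glb_Rbar_unique. split.
  - intros x Hx. simpl. apply (lpath_nonneg L I HL a a x Hx).
  - intros b Hb. apply Hb. constructor.
Qed.

Lemma qdist_transport {P Q : Type} (L1 : P -> P -> R -> Prop) (I1 : P -> P -> Prop)
  (L2 : Q -> Q -> R -> Prop) (I2 : Q -> Q -> Prop) (f : P -> Q) (h : Q -> P) :
  (forall a, h (f a) = a) ->
  (forall a b r, L1 a b r -> L2 (f a) (f b) r) -> (forall a b, I1 a b -> I2 (f a) (f b)) ->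
  (forall a b r, L2 a b r -> L1 (h a) (h b) r) -> (forall a b, I2 a b -> I1 (h a) (h b)) ->
  forall a a', qdist L2 I2 (f a) (f a') = qdist L1 I1 a a'.
Proof.
  intros hf L12 I12 L21 I21 a a'. unfold qdist. f_equal.
  apply functional_extensionality; intros r. apply propositional_extensionality. split.
  - intros P2. rewrite <- (hf a), <- (hf a'). exact (lpath_map _ _ _ _ h L21 I21 _ _ _ P2).
  - exact (lpath_map _ _ _ _ f L12 I12 a a' r).
Qed.

Section Correspondence.
Variable G : group.
Variable X : G -> Prop.
Variable g : G.

Local Notation mul := (@gmul G).
Local Notation one := (@gone G).
Local Notation inv := (@ginv G).
Local Notation len := (ell G X).
Local Notation MonX := (Mon G X).
Local Notation wp := (wprod G).
(* The chain [c0 :: rest] with weights [p], read as a weighted factorization: outer factors [c0] and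
   [chain_right c0 rest], inner factors [quotients (c0 :: rest)], positions [chain_positions p]. *)
Local Notation chain_right c0 rest := (mul (inv (last (c0 :: rest) c0)) g).
Local Notation chain_positions p c := (partial_sums 0 (map p c)).

(** * Word length and additive factorizations *)

Lemma inv_mul_cancel (a b : G) : mul (inv a) (mul a b) = b.
Proof. rewrite gmulA, gmulVl, gmul1l; reflexivity. Qed.

Lemma mul_inv_cancel (a b : G) : mul a (mul (inv a) b) = b.
Proof. rewrite gmulA, gmulVr, gmul1l; reflexivity. Qed.

Lemma mul_cancel_l (a b c : G) : mul a b = mul a c -> b = c.
Proof. intro H. rewrite <- (inv_mul_cancel a b), H, inv_mul_cancel; reflexivity. Qed.

Lemma eq_inv_mul (a b c : G) : mul a b = c -> b = mul (inv a) c.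
Proof. intro H; subst; rewrite inv_mul_cancel; reflexivity. Qed.

Lemma wprod_app (l1 l2 : list G) : wprod G (l1 ++ l2) = mul (wprod G l1) (wprod G l2).
Proof.
  induction l1; simpl. rewrite gmul1l; reflexivity.
  unfold wprod in *; simpl. rewrite IHl1, gmulA; reflexivity.
Qed.

Lemma wprod_merge l1 a b l2 : wp (l1 ++ a :: b :: l2) = wp (l1 ++ mul a b :: l2).
Proof.
  rewrite !wprod_app. f_equal. unfold wprod; simpl. apply gmulA.
Qed.

Lemma Mon_one : MonX one.
Proof. exists []; split; [constructor | reflexivity]. Qed.

Lemma Mon_mul {a b} : MonX a -> MonX b -> MonX (mul a b).
Proof.
  intros [l1 [H1 E1]] [l2 [H2 E2]]. exists (l1 ++ l2); split.
  apply List.Forall_app; auto. rewrite wprod_app; subst; reflexivity.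
Qed.

Lemma Mon_wprod {l} : List.Forall MonX l -> MonX (wprod G l).
Proof. induction 1; simpl. apply Mon_one. apply Mon_mul; auto. Qed.

Lemma ell_spec {x} : MonX x -> is_len G X x (len x).
Proof.
  intros HM. unfold ell. apply epsilon_spec.
  destruct HM as [l0 [H0 E0]].
  assert (minimal_word : forall n, forall l, List.Forall X l -> wprod G l = x -> (length l <= n)%nat ->
     exists m, is_len G X x m).
  { induction n; intros l Hl El Hn.
    - exists 0%nat. split. exists l; repeat split; auto; lia. intros; lia.
    - destruct (classic (exists l', List.Forall X l' /\ wprod G l' = x /\
        (length l' <= n)%nat)) as [[l' [A [B C]]]|N].
      + eapply IHn; eauto.
      + exists (length l). split. exists l; auto.
        intros l' A B. destruct (Nat.le_gt_cases (length l) (length l')); auto.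
        exfalso; apply N; exists l'; repeat split; auto; lia. }
  eapply minimal_word; eauto.
Qed.

Lemma ell_le_word {x l} : List.Forall X l -> wprod G l = x -> (len x <= length l)%nat.
Proof.
  intros H E. assert (HM : MonX x) by (exists l; auto). destruct (ell_spec HM) as [_ H2]. apply H2; auto.
Qed.

Lemma ell_word {x} : MonX x -> exists l, List.Forall X l /\ wprod G l = x /\ length l = len x.
Proof. intros H. apply (ell_spec H). Qed.

Lemma ell_mul {a b} : MonX a -> MonX b -> (len (mul a b) <= len a + len b)%nat.
Proof.
  intros Ha Hb. destruct (ell_word Ha) as [la [A1 [A2 A3]]].
  destruct (ell_word Hb) as [lb [B1 [B2 B3]]].
  rewrite <- A3, <- B3, <- length_app. apply ell_le_word.
  apply List.Forall_app; auto. rewrite wprod_app; subst; reflexivity.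
Qed.

Lemma ell_one : len one = 0%nat.
Proof. pose proof (ell_le_word (l:=[]) (List.Forall_nil _) eq_refl). simpl in H; lia. Qed.

Lemma ell_eq0 {x} : MonX x -> len x = 0%nat -> x = one.
Proof.
  intros H E. destruct (ell_word H) as [l [A [B C]]]. rewrite E in C.
  destruct l; [subst; reflexivity | discriminate].
Qed.

Lemma ell_pos x : MonX x -> x <> one -> (1 <= len x)%nat.
Proof. intros H N. destruct (len x) eqn:E; [|lia]. exfalso; apply N. apply ell_eq0; auto. Qed.

Lemma ell_wprod {l} : List.Forall MonX l -> (len (wprod G l) <= nsum (ell G X) l)%nat.
Proof.
  induction 1; simpl. rewrite ell_one; lia.
  pose proof (ell_mul H (Mon_wprod H0)). unfold wprod in *. simpl in *. lia.
Qed.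

Lemma le_intro x x' y : MonX x -> MonX x' -> mul x x' = y -> (len x + len x' = len y)%nat -> le G X x y.
Proof. intros; split; auto. exists x'; auto. Qed.

Lemma le_refl x : MonX x -> le G X x x.
Proof.
  intros H. apply le_intro with (x' := one); auto. apply Mon_one. apply gmul1r. rewrite ell_one; lia.
Qed.

Lemma lt_ell x y : lt G X x y -> (len x < len y)%nat.
Proof.
  intros [[HM [x' [HM' [E1 E2]]]] N].
  assert (x' <> one) by (intro; subst; apply N; rewrite gmul1r; auto).
  pose proof (ell_pos x' HM' H). lia.
Qed.

Lemma le_ell_eq x y : le G X x y -> len x = len y -> x = y.
Proof.
  intros [HM [x' [HM' [E1 E2]]]] E. assert (len x' = 0%nat) by lia.
  rewrite (ell_eq0 HM' H), gmul1r in E1. auto.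
Qed.

Definition additive (l : list G) : Prop := List.Forall MonX l /\ len (wp l) = nsum len l.

Lemma nsum_app (l1 l2 : list G) : nsum len (l1 ++ l2) = (nsum len l1 + nsum len l2)%nat.
Proof. induction l1; simpl; auto. unfold nsum in *; simpl in *; lia. Qed.

Lemma additive_infix l1 l2 l3 : additive (l1 ++ l2 ++ l3) -> additive l2.
Proof.
  intros [HF HE]. apply Forall_app in HF as [H1 H23]. apply Forall_app in H23 as [H2 H3].
  split; auto. rewrite !wprod_app, !nsum_app in HE.
  pose proof (ell_wprod H1). pose proof (ell_wprod H2). pose proof (ell_wprod H3).
  pose proof (ell_mul (Mon_wprod H1) (Mon_mul (Mon_wprod H2) (Mon_wprod H3))).
  pose proof (ell_mul (Mon_wprod H2) (Mon_wprod H3)). lia.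
Qed.

Lemma additive_app_l l1 l2 : additive (l1 ++ l2) -> additive l1.
Proof. intros H. apply additive_infix with (l1:=[]) (l3:=l2). exact H. Qed.

Lemma additive_app_r l1 l2 : additive (l1 ++ l2) -> additive l2.
Proof. intros H. apply additive_infix with (l1:=l1) (l3:=[]). rewrite app_nil_r; exact H. Qed.

Lemma additive_ell_split l1 l2 : additive (l1 ++ l2) ->
  len (mul (wp l1) (wp l2)) = (len (wp l1) + len (wp l2))%nat.
Proof.
  intros H. pose proof (additive_app_l _ _ H) as [_ E1]. pose proof (additive_app_r _ _ H) as [_ E2].
  destruct H as [_ E]. rewrite wprod_app, nsum_app in E. lia.
Qed.

Lemma additive_ell_prefix a xs1 rest : additive (a :: xs1 ++ rest) ->
  len (mul a (wp xs1)) = (len a + nsum len xs1)%nat.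
Proof.
  intros H. change (a :: xs1 ++ rest) with ((a :: xs1) ++ rest) in H.
  apply additive_app_l in H. destruct H as [HF HE].
  change (wp (a :: xs1)) with (mul a (wp xs1)) in HE. rewrite HE. reflexivity.
Qed.

Lemma additive_merge l1 a b l2 : additive (l1 ++ a :: b :: l2) -> additive (l1 ++ mul a b :: l2).
Proof.
  intros H. pose proof (additive_infix l1 [a; b] l2 H) as [F E].
  inversion F; subst. inversion H3; subst.
  assert (Eab : len (mul a b) = (len a + len b)%nat).
  { unfold wprod in E; simpl in E. rewrite gmul1r in E. rewrite E. unfold nsum; simpl. lia. }
  destruct H as [HF HE]. split.
  - apply Forall_app in HF as [F1 F2]. apply Forall_app; split; auto.
    inversion F2; subst. inversion H6; subst. constructor; auto. apply Mon_mul; auto.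
  - rewrite <- wprod_merge, HE. rewrite !nsum_app. unfold nsum; simpl. rewrite Eab. lia.
Qed.

Lemma additive_merge_head a b l : additive (a :: b :: l) -> additive (mul a b :: l).
Proof.
  intros H. pose proof (additive_ell_prefix a [b] l H) as E.
  destruct H as [HF HE]. inversion HF; subst. inversion H2; subst. split.
  - constructor; auto. apply Mon_mul; auto.
  - change (wp (mul a b :: l)) with (mul (mul a b) (wp l)).
    rewrite <- gmulA. change (mul a (mul b (wp l))) with (wp (a :: b :: l)). rewrite HE.
    simpl. unfold wprod in E; simpl in E. rewrite gmul1r in E. rewrite E. simpl. lia.
Qed.

Lemma additive_le_prefix a xs1 rest : additive (a :: xs1 ++ rest) -> le G X a (mul a (wp xs1)).
Proof.
  intros H. pose proof (additive_ell_prefix a xs1 rest H) as E.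
  assert (H2 : additive (xs1 ++ rest)) by (apply (additive_app_r [a]); exact H).
  pose proof (additive_app_l _ _ H2) as [F1 E1].
  destruct H as [HF _]. inversion HF; subst.
  apply le_intro with (x' := wp xs1); auto. apply Mon_wprod; auto. lia.
Qed.

Lemma lin_fact_additive xL xs xR : lin_fact G X g xL xs xR ->
  additive (xL :: xs ++ [xR]) /\ wp (xL :: xs ++ [xR]) = g /\ nsum len (xL :: xs ++ [xR]) = len g.
Proof.
  intros [A [B [C [D [E F]]]]].
  assert (W : wp (xL :: xs ++ [xR]) = g).
  { simpl. unfold wprod at 1. simpl. fold (wp (xs ++ [xR])). rewrite wprod_app. simpl.
    unfold wprod; simpl. rewrite gmul1r. exact F. }
  assert (N : nsum len (xL :: xs ++ [xR]) = len g).
  { change (nsum len (xL :: xs ++ [xR])) with (len xL + nsum len (xs ++ [xR]))%nat.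
    rewrite nsum_app. simpl. lia. }
  split; [|split; auto]. split.
  - constructor; auto. apply Forall_app; split; auto.
  - rewrite W, N; reflexivity.
Qed.

Lemma lin_fact_iff xL xs xR : lin_fact G X g xL xs xR <->
  additive (xL :: xs ++ [xR]) /\ wp (xL :: xs ++ [xR]) = g /\ List.Forall (fun x => x <> one) xs.
Proof.
  split.
  - intros HL. destruct (lin_fact_additive xL xs xR HL) as [A [B _]]. split; auto. split; auto. apply HL.
  - intros [[HF HE] [HW HN]]. pose proof (Forall_inv HF) as ML. pose proof (Forall_inv_tail HF) as F12.
    apply Forall_app in F12 as [F1 F2]. pose proof (Forall_inv F2) as MR.
    assert (W : mul xL (mul (wp xs) xR) = wp (xL :: xs ++ [xR])).
    { change (wp (xL :: xs ++ [xR])) with (mul xL (wp (xs ++ [xR]))). rewrite wprod_app. f_equal.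
        f_equal.
      unfold wprod; simpl. rewrite gmul1r; auto. }
    repeat split; auto.
    + rewrite <- HW, HE. change (nsum len (xL :: xs ++ [xR])) with (len xL + nsum len (xs ++ [xR]))%nat.
      rewrite nsum_app. unfold nsum at 3; simpl. lia.
    + rewrite W; auto.
Qed.

(** * Chains and factorizations *)

Fixpoint prefixes (a : G) (xs : list G) : list G :=
  match xs with [] => [a] | x :: xs' => a :: prefixes (mul a x) xs' end.

Lemma length_prefixes a xs : length (prefixes a xs) = S (length xs).
Proof. revert a; induction xs; simpl; auto. Qed.

Lemma nth_prefixes a xs i : (i < length xs)%nat ->
  nth (S i) (prefixes a xs) one = mul (nth i (prefixes a xs) one) (nth i xs one).
Proof.
  revert a i; induction xs as [|x xs IH]; intros a i Hi. simpl in Hi; lia.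
  destruct i. simpl. destruct xs; reflexivity.
  simpl prefixes.
  change (nth (S (S i)) (a :: prefixes (mul a x) xs) one) with (nth (S i) (prefixes (mul a x) xs) one).
  rewrite IH by (simpl in Hi; lia). reflexivity.
Qed.

Lemma in_prefixes a xs y : In y (prefixes a xs) <-> exists xs1 xs2, xs = xs1 ++ xs2 /\
  y = mul a (wp xs1).
Proof.
  revert a; induction xs; intros b; simpl; split.
  - intros [<-|[]]. exists [], []; split; auto. simpl. unfold wprod; simpl; rewrite gmul1r; auto.
  - intros [xs1 [xs2 [E1 E2]]]. destruct xs1; [|discriminate].
    left; subst; unfold wprod; simpl; rewrite gmul1r; auto.
  - intros [<-|H]. exists [], (a :: xs); split; auto. unfold wprod; simpl; rewrite gmul1r; auto.
    apply IHxs in H as [xs1 [xs2 [E1 E2]]]. exists (a :: xs1), xs2; split. subst; auto.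
    subst. unfold wprod; simpl. rewrite gmulA; auto.
  - intros [xs1 [xs2 [E1 E2]]]. destruct xs1 as [|x xs1].
    left; subst; unfold wprod; simpl; rewrite gmul1r; auto.
    right. injection E1; intros; subst. apply IHxs. exists xs1, xs2; split; auto.
    unfold wprod; simpl; rewrite gmulA; auto.
Qed.

Lemma prefixes_sorted_le a xs rest : additive (a :: xs ++ rest) ->
  StronglySorted (le G X) (prefixes a xs).
Proof.
  revert a; induction xs as [|x xs IH]; intros a H; simpl.
  - constructor; constructor.
  - constructor.
    + apply IH. apply additive_merge_head. exact H.
    + apply Forall_forall. intros y Hy. apply in_prefixes in Hy as [xs1 [xs2 [E1 E2]]]. subst y xs.
      replace (mul (mul a x) (wp xs1)) with (mul a (wp (x :: xs1))).
      apply additive_le_prefix with (rest := xs2 ++ rest). simpl. rewrite app_assoc. exact H.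
      change (wp (x :: xs1)) with (mul x (wp xs1)). apply gmulA.
Qed.

Lemma prefixes_ell_lower a xs rest : additive (a :: xs ++ rest) ->
  List.Forall (fun y => (len a <= len y)%nat) (prefixes a xs).
Proof.
  intros H. pose proof (prefixes_sorted_le a xs rest H) as S. destruct xs; simpl in *.
  constructor; auto. 
  inversion S; subst. constructor; auto. revert H3. apply Forall_impl. intros y [_ [x' [_ [_ E]]]]. lia.
Qed.

Lemma prefixes_sorted_ell a xs rest : additive (a :: xs ++ rest) -> List.Forall (fun x => x <> one) xs ->
  StronglySorted (fun u v => (len u < len v)%nat) (prefixes a xs).
Proof.
  revert a; induction xs as [|x xs IH]; intros a H N; simpl.
  - constructor; constructor.
  - inversion N; subst. constructor.
    + apply IH; auto. apply additive_merge_head. exact H.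
    + pose proof (prefixes_ell_lower (mul a x) xs rest (additive_merge_head _ _ _ H)) as F.
      pose proof (additive_ell_prefix a [x] (xs ++ rest) H) as E. simpl in E.
      unfold wprod in E; simpl in E.
      rewrite gmul1r in E. destruct H as [HF _]. inversion HF; subst. inversion H4; subst.
      pose proof (ell_pos x H5 H2).
      revert F. apply Forall_impl. intros y Hy. lia.
Qed.

Lemma sorted_ell_NoDup (l : list G) : StronglySorted (fun u v => (len u < len v)%nat) l -> NoDup l.
Proof.
  induction 1; constructor; auto. intro Hi. rewrite Forall_forall in H0. specialize (H0 a Hi). lia.
Qed.

Lemma sorted_le_comparable (l : list G) : StronglySorted (le G X) l -> List.Forall MonX l ->
  forall x y, In x l -> In y l -> le G X x y \/ le G X y x.
Proof.
  induction 1; intros HM x y Hx Hy. destruct Hx.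
  inversion HM; subst. rewrite Forall_forall in H0.
  destruct Hx as [<-|Hx]; destruct Hy as [<-|Hy].
  - left; apply le_refl; auto.
  - left; auto.
  - right; auto.
  - apply IHStronglySorted; auto.
Qed.

Lemma Sorted_lt_NoDup l : Sorted (lt G X) l -> NoDup l.
Proof.
  intros H. apply sorted_ell_NoDup. apply Sorted_StronglySorted. intros a b c; lia.
  clear -H. induction H; constructor; auto. destruct H0; constructor. apply lt_ell; auto.
Qed.

Lemma lin_fact_prefixes_inI xL xs xR : lin_fact G X g xL xs xR ->
  List.Forall (inI G X g) (prefixes xL xs).
Proof.
  intros HL. destruct (lin_fact_additive _ _ _ HL) as [HA [HW HN]].
  apply Forall_forall. intros y Hy. apply in_prefixes in Hy as [xs1 [xs2 [E1 E2]]]. subst xs y.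
  unfold inI.
  assert (HA' : additive ((xL :: xs1) ++ (xs2 ++ [xR]))) by (rewrite <- app_assoc in HA; simpl;
      exact HA).
  assert (E3 : mul (wp (xL :: xs1)) (wp (xs2 ++ [xR])) = g).
  { rewrite <- wprod_app, <- HW. simpl. rewrite <- app_assoc. reflexivity. }
  apply le_intro with (x' := wp (xs2 ++ [xR])).
  - change (mul xL (wp xs1)) with (wp (xL :: xs1)). apply Mon_wprod.
    pose proof (additive_app_l _ _ HA') as [F _]. exact F.
  - apply Mon_wprod. pose proof (additive_app_r _ _ HA') as [F _]. exact F.
  - exact E3.
  - pose proof (additive_ell_split _ _ HA') as E. rewrite E3 in E. rewrite E. reflexivity.
Qed.

Lemma lin_fact_prefixes_chain xL xs xR : lin_fact G X g xL xs xR -> chain_list G X g (prefixes xL xs).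
Proof.
  intros HL. pose proof (lin_fact_prefixes_inI _ _ _ HL) as HI.
  destruct (lin_fact_additive _ _ _ HL) as [HA _].
  assert (N : List.Forall (fun x => x <> one) xs) by (apply HL).
  split; [|split; auto].
  - apply sorted_ell_NoDup. apply prefixes_sorted_ell with (rest := [xR]); auto.
  - apply sorted_le_comparable. apply prefixes_sorted_le with (rest := [xR]); auto.
    revert HI. apply Forall_impl. intros y [HM _]; exact HM.
Qed.

Lemma lin_fact_strict_chain xL xs xR : lin_fact G X g xL xs xR -> strict_chain G X g (prefixes xL xs).
Proof.
  intros HL. destruct (lin_fact_additive _ _ _ HL) as [HA _].
  split; [apply (lin_fact_prefixes_inI _ _ _ HL)|].
  intros i Hi. split.
  - apply StronglySorted_nth; auto. apply prefixes_sorted_le with (rest := [xR]); auto.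
  - intro E.
    pose proof (prefixes_sorted_ell xL xs [xR] HA (proj1 (proj2 (proj2 HL)))) as Sxs.
    pose proof (StronglySorted_nth _ _ one i Sxs Hi) as L.
    simpl in L. rewrite E in L. lia.
Qed.

Fixpoint quotients (l : list G) : list G :=
  match l with
  | a :: ((b :: _) as l') => mul (inv a) b :: quotients l'
  | _ => []
  end.

Lemma length_quotients c0 rest : length (quotients (c0 :: rest)) = length rest.
Proof.
  revert c0; induction rest; intros c0; [reflexivity|]. specialize (IHrest a). simpl in *.
  rewrite IHrest. reflexivity.
Qed.

Lemma nth_quotients l i : (S i < length l)%nat ->
  nth i (quotients l) one = mul (inv (nth i l one)) (nth (S i) l one).
Proof.
  revert i; induction l as [|a l IH]; intros i Hi. simpl in Hi; lia.
  destruct l as [|b l]. simpl in Hi; lia.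
  destruct i. reflexivity.
  change (quotients (a :: b :: l)) with (mul (inv a) b :: quotients (b :: l)). simpl nth at 1.
  rewrite IH by (simpl in *; lia). reflexivity.
Qed.

Lemma prefixes_quotients c0 rest : prefixes c0 (quotients (c0 :: rest)) = c0 :: rest.
Proof.
  revert c0; induction rest as [|c1 rest IH]; intros c0; simpl; auto.
  rewrite mul_inv_cancel. f_equal. apply IH.
Qed.

Lemma last_default (a : G) l d d' : last (a :: l) d = last (a :: l) d'.
Proof.
  revert a; induction l as [|b l IH]; intros a; simpl; auto. specialize (IH b). destruct l; auto.
Qed.

Lemma chain_lin_fact c0 rest : Sorted (lt G X) (c0 :: rest) -> List.Forall (inI G X g) (c0 :: rest) ->
  lin_fact G X g c0 (quotients (c0 :: rest)) (chain_right c0 rest).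
Proof.
  revert c0; induction rest as [|c1 rest IH]; intros c0 HS HI.
  - simpl. pose proof (Forall_inv HI) as H0. destruct H0 as [HM [x' [HM' [E1 E2]]]].
    pose proof (eq_inv_mul _ _ _ E1) as E3. rewrite <- E3.
    repeat split; auto. simpl. lia. simpl. unfold wprod; simpl. rewrite gmul1l. exact E1.
  - apply Sorted_inv in HS as [HS HR]. apply HdRel_inv in HR.
    pose proof (Forall_inv HI) as HI0. pose proof (Forall_inv_tail HI) as HI1.
    destruct HR as [[HM [x' [HM' [E1 E2]]]] NE].
    specialize (IH c1 HS HI1).
    destruct IH as [A [B [C [D [E F]]]]].
    change (last (c0 :: c1 :: rest) c0) with (last (c1 :: rest) c0).
    rewrite (last_default c1 rest c0 c1).
    set (xR := mul (inv (last (c1 :: rest) c1)) g) in *.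
    change (quotients (c0 :: c1 :: rest)) with (mul (inv c0) c1 :: quotients (c1 :: rest)).
    pose proof (eq_inv_mul _ _ _ E1) as E3. rewrite <- E3.
    repeat split; auto.
    + constructor; auto. intro Hx. apply NE. rewrite <- E1, Hx, gmul1r; auto.
    + unfold nsum in *; simpl in *; lia.
    + unfold wprod; simpl. fold (wp (quotients (c1 :: rest))).
      rewrite <- (gmulA G x'), (gmulA G c0 x'), E1. exact F.
Qed.

Lemma Sorted_lt_of_ell l : Sorted (fun a b => (len a <= len b)%nat) l -> NoDup l ->
  (forall x y, In x l -> In y l -> le G X x y \/ le G X y x) -> Sorted (lt G X) l.
Proof.
  induction 1 as [|a l S IH F]; intros ND HC. constructor.
  constructor. apply IH. inversion ND; auto. intros; apply HC; right; auto.
  destruct F as [|b l' Hab]; constructor. inversion ND; subst.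
  assert (a <> b) by (intro; subst; apply H1; left; auto).
  destruct (HC a b (or_introl eq_refl) (or_intror (or_introl eq_refl))) as [L|L].
  - split; auto.
  - exfalso. pose proof L as [HM [x' [HM' [E1 E2]]]]. apply H. symmetry. apply le_ell_eq; auto. lia.
Qed.

Lemma chain_sorted_enum s : chain_list G X g s -> s <> [] ->
  exists c0 rest, Permutation s (c0 :: rest) /\ Sorted (lt G X) (c0 :: rest) /\
  List.Forall (inI G X g) (c0 :: rest).
Proof.
  intros [ND [HI HC]] Hne. destruct (sort_by_key len s) as [y [P S]].
  destruct y as [|c0 rest]. apply Permutation_sym, Permutation_nil in P. contradiction.
  exists c0, rest. split; auto. split.
  - apply Sorted_lt_of_ell; auto. eapply Permutation_NoDup; eauto.
    intros x y Hx Hy.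
    apply HC; [apply (Permutation_in x (Permutation_sym P) Hx) |
               apply (Permutation_in y (Permutation_sym P) Hy)].
  - rewrite Forall_forall in *. intros x Hx. apply HI. apply (Permutation_in x (Permutation_sym P) Hx).
Qed.

(* The chain point of a factorization with factors [xs] at positions [t]: the prefix ending just
   before the factor at t_i gets weight t_i - t_(i-1), with t_0 = v and t_(k+1) = 1. *)
Fixpoint gap_weights (a : G) (v : R) (xs : list G) (t : list R) : list (G * R) :=
  match xs, t with
  | x :: xs', s :: t' => (a, s - v) :: gap_weights (mul a x) s xs' t'
  | _, _ => [(a, 1 - v)]
  end.

Lemma map_fst_gap_weights a v xs t : length t = length xs ->
  map fst (gap_weights a v xs t) = prefixes a xs.
Proof.
  revert a v t; induction xs; intros b v t Ht; destruct t; simpl in *; try discriminate; auto.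
  f_equal. apply IHxs. lia.
Qed.

Lemma map_snd_gap_weights a a' v xs t : map snd (gap_weights a v xs t) = map snd (gap_weights a' v xs t).
Proof.
  revert a a' v t; induction xs as [|x xs IH]; intros a a' v t; destruct t; simpl; auto. f_equal.
  apply IH.
Qed.

Lemma lsum_gap_weights a v xs t : length t = length xs -> lsum snd (gap_weights a v xs t) = 1 - v.
Proof.
  revert a v t; induction xs; intros b v t Ht; destruct t; cbn [gap_weights length] in *;
      try discriminate.
  - rewrite lsum_cons, lsum_nil. simpl. ring.
  - rewrite lsum_cons. rewrite IHxs by lia. simpl. ring.
Qed.

Lemma gap_weights_nonneg a v xs t : v <= 1 -> length t = length xs ->
  List.Forall (fun s => v <= s <= 1) t -> Sorted Rle t ->
  List.Forall (fun p => 0 <= snd p) (gap_weights a v xs t).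
Proof.
  revert a v t; induction xs; intros b v t Hv Ht HF HS; destruct t as [|s t];
      cbn [gap_weights length] in *; try discriminate.
  - constructor; simpl; auto. lra.
  - inversion HF; subst. constructor. simpl; lra.
    apply IHxs; auto. lra. pose proof (Sorted_Rle_Forall s t HS) as F.
    apply Forall_forall. intros u Hu. rewrite Forall_forall in F, H2. split. apply F; auto.
    apply H2; auto.
    apply Sorted_inv in HS; tauto.
Qed.

Lemma gap_weights_pos a v xs t : v < 1 -> length t = length xs -> List.Forall (fun s => v < s < 1) t ->
  Sorted Rlt t ->
  List.Forall (fun p => 0 < snd p) (gap_weights a v xs t).
Proof.
  revert a v t; induction xs; intros b v t Hv Ht HF HS; destruct t as [|s t];
      cbn [gap_weights length] in *; try discriminate.
  - constructor; simpl; auto. lra.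
  - inversion HF; subst. constructor. simpl; lra.
    apply IHxs; auto. lra.
    assert (SS : StronglySorted Rlt (s :: t)) by (apply Sorted_StronglySorted; auto; intros x y z;
        apply Rlt_trans).
    apply StronglySorted_inv in SS as [_ Fs].
    apply Forall_forall. intros u Hu. rewrite Forall_forall in H2, Fs. split. apply Fs; auto.
    apply H2; auto.
    apply Sorted_inv in HS; tauto.
Qed.

Lemma gap_weights_inj a a' v xs xs' t t' : length t = length xs -> length t' = length xs' ->
  gap_weights a v xs t = gap_weights a' v xs' t' -> a = a' /\ xs = xs' /\ t = t'.
Proof.
  revert a a' v xs' t t'; induction xs as [|x xs IH]; intros a a' v xs' t t' H1 H2 E;
  destruct t as [|s t]; simpl in H1; try discriminate;
  destruct xs' as [|x' xs']; destruct t' as [|s' t']; simpl in H2; try discriminate;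
      cbn [gap_weights] in E.
  - injection E; intros; subst; auto.
  - injection E; intros Ea _ _. exfalso. destruct xs'; destruct t'; simpl in Ea; discriminate.
  - injection E; intros Ea _ _. exfalso. destruct xs; destruct t; simpl in Ea; discriminate.
  - injection E; intros E1 E2 E3. assert (s = s') by lra. subst s' a'.
    destruct (IH (mul a x) (mul a x') s xs' t t' ltac:(lia) ltac:(lia) E1) as [A [B C]].
    apply mul_cancel_l in A. subst. auto.
Qed.

Lemma gap_weights_partial_sums (p : G -> R) c0 rest acc :
  acc + lsum p (c0 :: rest) = 1 ->
  gap_weights c0 acc (quotients (c0 :: rest)) (partial_sums acc (map p (c0 :: rest))) =
      map (fun x => (x, p x)) (c0 :: rest).
Proof.
  revert c0 acc; induction rest as [|c1 rest IH]; intros c0 acc H; simpl in *.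
  - unfold lsum in H; simpl in H. f_equal. f_equal. lra.
  - rewrite mul_inv_cancel. f_equal. f_equal. ring.
    apply (IH c1 (acc + p c0)). unfold lsum in *; simpl in *. lra.
Qed.

Lemma gap_weights_last_one a v xs x t y : length t = length xs ->
  weight_of (gap_weights a v (xs ++ [x]) (t ++ [1])) y = weight_of (gap_weights a v xs t) y.
Proof.
  revert a v t; induction xs as [|z xs IH]; intros a v t Ht; destruct t as [|s t]; simpl in Ht;
      try discriminate.
  - cbn [app gap_weights]. rewrite !weight_of_cons. unfold weight_of; simpl.
    destruct (excluded_middle_informative (y = a));
        destruct (excluded_middle_informative (y = (mul a x))); ring.
  - cbn [app gap_weights]. rewrite !weight_of_cons. rewrite IH; auto.
Qed.

Lemma gap_weights_merge a v xs1 t1 b c xs2 s t2 y : length t1 = length xs1 ->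
  weight_of (gap_weights a v (xs1 ++ b :: c :: xs2) (t1 ++ s :: s :: t2)) y =
      weight_of (gap_weights a v (xs1 ++ mul b c :: xs2) (t1 ++ s :: t2)) y.
Proof.
  revert a v t1; induction xs1 as [|z xs IH]; intros a v t1 Ht; destruct t1 as [|r t1];
      simpl in Ht; try discriminate.
  - cbn [app gap_weights]. rewrite !weight_of_cons. rewrite gmulA.
    destruct (excluded_middle_informative (y = a));
        destruct (excluded_middle_informative (y = (mul a b))); ring.
  - cbn [app gap_weights]. rewrite !weight_of_cons. rewrite IH; auto.
Qed.

Definition cell_point xL xs t := weight_of (gap_weights xL 0 xs t).

Definition closed_cell xL xs xR (t : list R) : Prop :=
  lin_fact G X g xL xs xR /\ length t = length xs /\
  List.Forall (fun s => 0 <= s <= 1) t /\ Sorted Rle t.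

Lemma positions_iff xs t : positions G xs t <->
  (length t = length xs /\ List.Forall (fun s => 0 <= s <= 1) t /\ Sorted Rle t).
Proof.
  unfold positions. rewrite (Sorted_nth_iff _ _ 0). tauto.
Qed.

Definition open_cell xL xs xR (t : list R) : Prop :=
  lin_fact G X g xL xs xR /\ length t = length xs /\
  List.Forall (fun s => 0 < s < 1) t /\ Sorted Rlt t.

Lemma open_closed_cell xL xs xR t : open_cell xL xs xR t -> closed_cell xL xs xR t.
Proof.
  intros [A [B [C D]]]. split; auto. split; auto. split.
  revert C; apply Forall_impl; intros; lra.
  clear -D. induction D; constructor; auto. destruct H; constructor; lra.
Qed.

Lemma closed_cell_carries xL xs xR t : closed_cell xL xs xR t ->
  carries G (prefixes xL xs) (cell_point xL xs t).
Proof.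
  intros [_ [Ht _]] x Hx. rewrite <- (map_fst_gap_weights xL 0 xs t Ht). apply weight_of_support; auto.
Qed.

Lemma cell_point_nth xL xs xR t i : closed_cell xL xs xR t -> (i <= length xs)%nat ->
  cell_point xL xs t (nth i (prefixes xL xs) one) = nth i (map snd (gap_weights xL 0 xs t)) 0.
Proof.
  intros [HL [Ht _]] Hi. pose proof (lin_fact_prefixes_chain _ _ _ HL) as [ND _].
  rewrite <- (map_fst_gap_weights xL 0 xs t Ht) in ND |- *. unfold cell_point. apply weight_of_nth; auto.
  rewrite <- (length_map fst), map_fst_gap_weights, length_prefixes; auto; lia.
Qed.

Lemma closed_cell_Opt xL xs xR t : closed_cell xL xs xR t -> Opt G X g (cell_point xL xs t).
Proof.
  intros [HL [Ht [HF HS]]]. pose proof (lin_fact_prefixes_chain xL xs xR HL) as HC.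
  split.
  - intros x. unfold cell_point. apply weight_of_nonneg.
    apply gap_weights_nonneg; [lra | exact Ht | | exact HS].
    revert HF; apply Forall_impl; intros; lra.
  - exists (prefixes xL xs). split; auto. split.
    + intros x Hx. rewrite <- (map_fst_gap_weights xL 0 xs t Ht). apply weight_of_support; auto.
    + destruct HC as [ND _]. unfold cell_point. rewrite <- (map_fst_gap_weights xL 0 xs t Ht) in *.
      rewrite (lsum_ext_in _ (fun x => 1 * weight_of (gap_weights xL 0 xs t) x)) by (intros; ring).
      rewrite lsum_weight_of by auto. pose proof (lsum_gap_weights xL 0 xs t Ht) as S. 
      rewrite (lsum_ext_in _ snd) by (intros; ring). rewrite S; ring.
Qed.

Lemma chain_closed_cell c0 rest (p : G -> R) : Sorted (lt G X) (c0 :: rest) ->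
  List.Forall (inI G X g) (c0 :: rest) ->
  (forall x, 0 <= p x) -> carries G (c0 :: rest) p -> lsum p (c0 :: rest) = 1 ->
  closed_cell c0 (quotients (c0 :: rest)) (chain_right c0 rest) (chain_positions p (c0 :: rest)) /\
  cell_point c0 (quotients (c0 :: rest)) (chain_positions p (c0 :: rest)) = p.
Proof.
  intros HS HI Hp HC Hs.
  assert (F : List.Forall (fun w => 0 <= w) (map p (c0 :: rest))) by (apply Forall_map,
      Forall_forall; auto).
  destruct (partial_sums_unit _ F) as [U L]; [rewrite lsum_map; exact Hs|].
  split.
  - split; [apply chain_lin_fact; auto|]. split; [|split; auto].
    rewrite map_cons, length_partial_sums, length_quotients, length_map; auto.
  - unfold cell_point. rewrite gap_weights_partial_sums by lra. apply weight_of_graph; auto.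
    apply Sorted_lt_NoDup; auto.
Qed.

Definition at_position (s : R) (p : G * R) : bool := if Req_dec_T (snd p) s then true else false.

Definition factor_at (xs : list G) (t : list R) (s : R) : G :=
  wp (map fst (filter (at_position s) (combine xs t))).

Definition assemble (xL : G) (A : R -> G) (xR : G) (s : R) : G :=
  if Req_dec_T s 0 then mul xL (A s)
  else if Req_dec_T s 1 then mul (A s) xR
  else if Rlt_dec 0 s then (if Rlt_dec s 1 then A s else one) else one.

Lemma place_assemble xL xs xR t : place G xL xs xR t = assemble xL (factor_at xs t) xR.
Proof. reflexivity. Qed.

Lemma assemble_0 xL A xR : assemble xL A xR 0 = mul xL (A 0).
Proof. unfold assemble. destruct (Req_dec_T 0 0); [auto|lra]. Qed.

Lemma assemble_1 xL A xR : assemble xL A xR 1 = mul (A 1) xR.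
Proof. unfold assemble. destruct (Req_dec_T 1 0); [lra|]. destruct (Req_dec_T 1 1); [auto|lra]. Qed.

Lemma assemble_inner xL A xR s : 0 < s < 1 -> assemble xL A xR s = A s.
Proof.
  intros H. unfold assemble. destruct (Req_dec_T s 0); [lra|]. destruct (Req_dec_T s 1); [lra|].
  destruct (Rlt_dec 0 s); [|lra]. destruct (Rlt_dec s 1); [auto|lra].
Qed.

Lemma assemble_outer xL A xR s : (s < 0 \/ 1 < s) -> assemble xL A xR s = one.
Proof.
  intros H. unfold assemble. destruct (Req_dec_T s 0); [lra|]. destruct (Req_dec_T s 1); [lra|].
  destruct (Rlt_dec 0 s); auto. destruct (Rlt_dec s 1); auto. lra.
Qed.

Lemma assemble_ext xL A xR xL' A' xR' :
  mul xL (A 0) = mul xL' (A' 0) -> mul (A 1) xR = mul (A' 1) xR' ->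
  (forall s, 0 < s < 1 -> A s = A' s) -> assemble xL A xR = assemble xL' A' xR'.
Proof.
  intros H0 H1 H. apply functional_extensionality. intros s.
  destruct (Req_dec_T s 0) as [->|N0]. rewrite !assemble_0; auto.
  destruct (Req_dec_T s 1) as [->|N1]. rewrite !assemble_1; auto.
  destruct (Rlt_dec 0 s); destruct (Rlt_dec s 1).
  - rewrite !assemble_inner by lra. auto.
  - rewrite !assemble_outer by lra. auto.
  - rewrite !assemble_outer by lra. auto.
  - lra.
Qed.

Lemma factor_at_cons x xs a t s : factor_at (x :: xs) (a :: t) s =
  if Req_dec_T a s then mul x (factor_at xs t s) else factor_at xs t s.
Proof. unfold factor_at, at_position. simpl. destruct (Req_dec_T a s); reflexivity. Qed.

Lemma factor_at_app xs1 t1 xs2 t2 s : length xs1 = length t1 ->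
  factor_at (xs1 ++ xs2) (t1 ++ t2) s = mul (factor_at xs1 t1 s) (factor_at xs2 t2 s).
Proof.
  intros Hl. unfold factor_at. rewrite combine_app_eq_length by auto.
  rewrite filter_app, map_app, wprod_app. reflexivity.
Qed.

Lemma factor_at_nil s : factor_at [] [] s = one.
Proof. reflexivity. Qed.

Lemma factor_at_notin xs t s : ~ In s t -> factor_at xs t s = one.
Proof.
  revert t; induction xs as [|x xs IH]; intros t H. reflexivity.
  destruct t as [|a t]. reflexivity. rewrite factor_at_cons.
  destruct (Req_dec_T a s). exfalso; apply H; left; auto. apply IH. intro; apply H; right; auto.
Qed.

Lemma factor_at_in xs t x s : NoDup t -> In (x, s) (combine xs t) -> factor_at xs t s = x.
Proof.
  revert t; induction xs as [|y xs IH]; intros t ND Hin. destruct Hin.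
  destruct t as [|a t]. destruct Hin. rewrite factor_at_cons. inversion ND; subst.
  destruct Hin as [E|Hin].
  - injection E; intros; subst. destruct (Req_dec_T s s); [|congruence]. rewrite factor_at_notin; auto.
    apply gmul1r.
  - destruct (Req_dec_T a s). subst. exfalso. apply H1. eapply in_combine_r; eauto. apply IH; auto.
Qed.

Lemma map_factor_at xs t : NoDup t -> length xs = length t -> map (factor_at xs t) t = xs.
Proof.
  intros ND Hl. apply nth_ext with (d := one) (d' := one). rewrite length_map; auto.
  intros i Hi. rewrite length_map in Hi.
  rewrite (nth_indep _ one (factor_at xs t 0)) by (rewrite length_map; auto).
  rewrite map_nth. apply factor_at_in; auto.
  rewrite <- (combine_nth xs t i one 0 Hl). apply nth_In. rewrite length_combine. lia.
Qed.

Lemma open_cell_place_0 xL xs xR t : open_cell xL xs xR t -> place G xL xs xR t 0 = xL.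
Proof.
  intros [A [B [C D]]]. rewrite place_assemble, assemble_0, factor_at_notin. apply gmul1r.
  intro Hi. rewrite Forall_forall in C. specialize (C 0 Hi). lra.
Qed.

Lemma open_cell_place_1 xL xs xR t : open_cell xL xs xR t -> place G xL xs xR t 1 = xR.
Proof.
  intros [A [B [C D]]]. rewrite place_assemble, assemble_1, factor_at_notin. apply gmul1l.
  intro Hi. rewrite Forall_forall in C. specialize (C 1 Hi). lra.
Qed.

Lemma open_cell_place_positions xL xs xR t : open_cell xL xs xR t -> map (place G xL xs xR t) t = xs.
Proof.
  intros [A [B [C D]]]. rewrite <- (map_factor_at xs t) at 2; auto.
  apply map_ext_in. intros s Hs. rewrite place_assemble, assemble_inner; auto.
  rewrite Forall_forall in C; auto.
  apply Sorted_Rlt_NoDup; auto.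
Qed.

Lemma open_cell_positions xL xs xR t s : open_cell xL xs xR t ->
  (In s t <-> (0 < s < 1 /\ place G xL xs xR t s <> one)).
Proof.
  intros HP. pose proof HP as [_ [_ [HF' _]]]. split.
  - intros Hi. rewrite Forall_forall in HF'. pose proof (HF' s Hi). split; auto.
    rewrite place_assemble, assemble_inner by auto. destruct (in_combine_r_inv xs t s) as [x Hx]; auto.
    apply eq_sym, HP.
    rewrite (factor_at_in xs t x s); auto. apply in_combine_l in Hx. destruct HP as [[_ [_ [N _]]] _].
    rewrite Forall_forall in N; auto. apply Sorted_Rlt_NoDup, HP.
  - intros [Hs N]. rewrite place_assemble, assemble_inner in N by auto.
    destruct (classic (In s t)); auto.
    exfalso; apply N, factor_at_notin; auto.
Qed.

Lemma open_cell_WF xL xs xR t : open_cell xL xs xR t -> WF G X g (place G xL xs xR t).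
Proof.
  intros HP. pose proof HP as [A [B [C D]]]. split.
  - intros s Hs. rewrite place_assemble, assemble_outer; auto.
  - exists t. split; [|split; [|split]].
    + apply (Sorted_nth_iff _ _ 0); auto.
    + exact C.
    + intros s Hs. rewrite place_assemble, assemble_inner by auto. split.
      * intros N. destruct (classic (In s t)); auto. exfalso; apply N, factor_at_notin; auto.
      * intros Hi. destruct (in_combine_r_inv xs t s (eq_sym B) Hi) as [x Hx].
        rewrite (factor_at_in xs t x s); auto. 2: apply Sorted_Rlt_NoDup; auto.
        apply in_combine_l in Hx. destruct A as [_ [_ [N _]]]. rewrite Forall_forall in N. apply N; auto.
    + rewrite open_cell_place_0, open_cell_place_1, open_cell_place_positions; auto.
Qed.

Lemma WF_open_cell (u : R -> G) : WF G X g u ->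
  exists ss, open_cell (u 0) (map u ss) (u 1) ss /\ place G (u 0) (map u ss) (u 1) ss = u.
Proof.
  intros [Hout [ss [HS [HF [Hiff HL]]]]]. exists ss.
  assert (HP : open_cell (u 0) (map u ss) (u 1) ss).
  { split; auto. split. rewrite length_map; auto. split; auto. apply (Sorted_nth_iff _ _ 0); auto. }
  split; auto.
  assert (ND : NoDup ss) by (apply Sorted_Rlt_NoDup, (Sorted_nth_iff _ _ 0); auto).
  apply functional_extensionality. intros s.
  destruct (Req_dec_T s 0) as [->|N0]. apply open_cell_place_0; auto.
  destruct (Req_dec_T s 1) as [->|N1]. apply open_cell_place_1; auto.
  destruct (Rlt_dec 0 s); destruct (Rlt_dec s 1).
  - rewrite place_assemble, assemble_inner by lra. destruct (classic (In s ss)) as [Hi|Hi].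
    + apply factor_at_in; auto. clear -Hi. induction ss as [|a ss IH]; [destruct Hi|]. simpl.
      destruct Hi as [->|Hi]; [left; auto | right; auto].
    + rewrite factor_at_notin; auto. destruct (classic (u s = one)) as [E|E]; [rewrite E; reflexivity|].
      exfalso; apply Hi, (proj1 (Hiff s ltac:(lra))); auto.
  - rewrite place_assemble, assemble_outer by lra. symmetry; apply Hout; lra.
  - rewrite place_assemble, assemble_outer by lra. symmetry; apply Hout; lra.
  - lra.
Qed.

(** * Euclidean coordinates of a cell *)

Lemma gap_weights_ell a v xs t rest : additive (a :: xs ++ rest) -> length t = length xs ->
  map (fun pr => (len (fst pr), snd pr)) (gap_weights a v xs t) =
      nat_gap_weights (len a) v (map len xs) t.
Proof.
  revert a v t; induction xs as [|x xs IH]; intros a v t HA Ht; destruct t as [|s t]; simpl in Ht;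
      try discriminate.
  - reflexivity.
  - cbn [gap_weights map nat_gap_weights fst snd]. f_equal.
    pose proof (additive_ell_prefix a [x] (xs ++ rest) HA) as E. simpl in E.
    unfold wprod in E; simpl in E. rewrite gmul1r in E.
    replace (len a + len x)%nat with (len (mul a x)) by lia.
    apply IH. apply additive_merge_head. exact HA. lia.
Qed.

Lemma list_sum_map_ell xs : list_sum (map len xs) = nsum len xs.
Proof. induction xs; simpl; auto. Qed.

Definition cell_step_sum xL xs t := step_sum (nat_gap_weights (len xL) 0 (map len xs) t).

Lemma wcoords_step_sum xL xs xR t : closed_cell xL xs xR t ->
  wcoords G X xL xs xR t = map (cell_step_sum xL xs t) (seq 0 (len g)).
Proof.
  intros [HL [Ht _]]. unfold wcoords.
  assert (E : (len xL + list_sum (map len xs) + len xR)%nat = len g).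
  { rewrite list_sum_map_ell. apply HL. }
  rewrite <- E.
  replace (map (fun p => repeat (snd p) (len (fst p))) (combine xs t)) with
    (map (fun p : nat * R => repeat (snd p) (fst p)) (combine (map len xs) t)).
  2:{ rewrite combine_map_l, map_map. reflexivity. }
  rewrite repeats_step_sum by (rewrite length_map; auto).
  apply map_ext. intros k. unfold cell_step_sum. ring.
Qed.

Lemma ocoord_cell_point xL xs xR t j : closed_cell xL xs xR t -> (j < len g)%nat ->
  ocoord G X g (prefixes xL xs) (cell_point xL xs t) j = 1 - cell_step_sum xL xs t (len g - 1 - j).
Proof.
  intros HV Hj. destruct HV as [HL [Ht [HF HS]]].
  pose proof (lin_fact_prefixes_chain xL xs xR HL) as [ND _].
  destruct (lin_fact_additive xL xs xR HL) as [HA _].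
  unfold ocoord, cell_point. rewrite <- (map_fst_gap_weights xL 0 xs t Ht) in *.
  rewrite (lsum_ext_in _
    (fun x => indicator (Nat.leb (len g - len x) j) 1 * weight_of (gap_weights xL 0 xs t) x)).
  2:{ intros x _. unfold indicator. destruct (Nat.leb _ _); ring. }
  rewrite lsum_weight_of by exact ND.
  unfold cell_step_sum, step_sum. rewrite <- (gap_weights_ell xL 0 xs t [xR] HA Ht). rewrite lsum_map.
  cbn [fst snd].
  pose proof (lsum_gap_weights xL 0 xs t Ht) as S1. 
  replace 1 with (1 - 0) at 1 by ring. rewrite <- S1, <- lsum_minus.
  apply lsum_ext_in. intros pr _. unfold indicator.
  destruct (Nat.leb (len g - len (fst pr)) j) eqn:E1;
      destruct (Nat.leb (len (fst pr)) (len g - 1 - j)) eqn:E2;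
  rewrite ?Nat.leb_le, ?Nat.leb_gt in E1; rewrite ?Nat.leb_le, ?Nat.leb_gt in E2; try lia; ring.
Qed.

Lemma edist_wcoords_ocoord xL xs xR t t' : closed_cell xL xs xR t -> closed_cell xL xs xR t' ->
  edist_list (wcoords G X xL xs xR t) (wcoords G X xL xs xR t') =
  sqrt (lsum (fun j => (ocoord G X g (prefixes xL xs) (cell_point xL xs t) j -
                        ocoord G X g (prefixes xL xs) (cell_point xL xs t') j) ^ 2) (seq 0 (len g))).
Proof.
  intros H1 H2. unfold edist_list. rewrite (wcoords_step_sum _ _ _ _ H1), (wcoords_step_sum _ _ _ _ H2).
  rewrite combine_map_seq, lsum_map. cbn [fst snd]. f_equal.
  transitivity (lsum (fun j => (cell_step_sum xL xs t (len g - 1 - j) -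
                                cell_step_sum xL xs t' (len g - 1 - j)) ^ 2) (seq 0 (len g))).
  - symmetry.
    exact (lsum_rev_seq (fun k => (cell_step_sum xL xs t k - cell_step_sum xL xs t' k) ^ 2) (len g)).
  - apply lsum_ext_in. intros j Hj. apply in_seq in Hj.
    rewrite (ocoord_cell_point _ _ _ _ _ H1), (ocoord_cell_point _ _ _ _ _ H2) by lia. ring.
Qed.

(** * Normal form of a cell point *)

Lemma closed_cell_absorb_left xL x xs xR t : closed_cell xL (x :: xs) xR (0 :: t) ->
  closed_cell (mul xL x) xs xR t /\ place G xL (x :: xs) xR (0 :: t) = place G (mul xL x) xs xR t /\
  cell_point xL (x :: xs) (0 :: t) = cell_point (mul xL x) xs t.
Proof.
  intros [HL [Ht [HF HS]]]. split; [|split].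
  - split; [|split; [simpl in Ht; lia|split]].
    + apply lin_fact_iff in HL as [A [B C]]. apply lin_fact_iff. pose proof (Forall_inv_tail C) as C'.
      split; [|split]; auto.
      * apply (additive_merge []). exact A.
      * rewrite <- B. symmetry. apply (wprod_merge [] xL x (xs ++ [xR])).
    + inversion HF; auto.
    + apply Sorted_inv in HS; tauto.
  - rewrite !place_assemble. apply assemble_ext.
    + rewrite factor_at_cons. destruct (Req_dec_T 0 0); [|lra]. apply gmulA.
    + rewrite factor_at_cons. destruct (Req_dec_T 0 1); [lra|]. auto.
    + intros s Hs. rewrite factor_at_cons. destruct (Req_dec_T 0 s); [lra|]. auto.
  - unfold cell_point. apply functional_extensionality; intros y. cbn [gap_weights].
    rewrite weight_of_cons.
    destruct (excluded_middle_informative (y = xL)); ring.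
Qed.

Lemma closed_cell_absorb_right xL xs x xR t : closed_cell xL (xs ++ [x]) xR (t ++ [1]) ->
  closed_cell xL xs (mul x xR) t /\ place G xL (xs ++ [x]) xR (t ++ [1]) = place G xL xs (mul x xR) t /\
  cell_point xL (xs ++ [x]) (t ++ [1]) = cell_point xL xs t.
Proof.
  intros [HL [Ht [HF HS]]]. rewrite !length_app in Ht. simpl in Ht.
  assert (Ht' : length t = length xs) by lia.
  split; [|split].
  - split; [|split; [auto|split]].
    + apply lin_fact_iff in HL as [A [B C]]. apply lin_fact_iff. apply Forall_app in C as [C _].
      replace (xL :: (xs ++ [x]) ++ [xR]) with ((xL :: xs) ++ x :: xR :: []) in A, B by (simpl;
          rewrite <- app_assoc; auto).
      split; [|split]; auto.
      * apply additive_merge in A. simpl in A. exact A.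
      * rewrite <- B, wprod_merge. reflexivity.
    + apply Forall_app in HF; tauto.
    + apply Sorted_app_l in HS; auto.
  - rewrite !place_assemble. apply assemble_ext.
    + rewrite factor_at_app by auto. rewrite factor_at_cons, factor_at_nil.
      destruct (Req_dec_T 1 0); [lra|]. rewrite gmul1r. auto.
    + rewrite factor_at_app by auto. rewrite factor_at_cons, factor_at_nil.
      destruct (Req_dec_T 1 1); [|lra]. rewrite gmul1r. rewrite gmulA. auto.
    + intros s Hs. rewrite factor_at_app by auto. rewrite factor_at_cons, factor_at_nil.
      destruct (Req_dec_T 1 s); [lra|]. apply gmul1r.
  - unfold cell_point. apply functional_extensionality; intros y. apply gap_weights_last_one; auto.
Qed.

Lemma closed_cell_merge xL xs1 b c xs2 xR t1 s t2 : length t1 = length xs1 ->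
  closed_cell xL (xs1 ++ b :: c :: xs2) xR (t1 ++ s :: s :: t2) ->
  closed_cell xL (xs1 ++ mul b c :: xs2) xR (t1 ++ s :: t2) /\
  place G xL (xs1 ++ b :: c :: xs2) xR (t1 ++ s :: s :: t2) =
      place G xL (xs1 ++ mul b c :: xs2) xR (t1 ++ s :: t2) /\
  cell_point xL (xs1 ++ b :: c :: xs2) (t1 ++ s :: s :: t2) =
      cell_point xL (xs1 ++ mul b c :: xs2) (t1 ++ s :: t2).
Proof.
  intros Hl [HL [Ht [HF HS]]]. rewrite !length_app in Ht. simpl in Ht.
  split; [|split].
  - split; [|split; [rewrite !length_app; simpl; lia|split]].
    + apply lin_fact_iff in HL as [A [B C]]. apply lin_fact_iff.
      replace (xL :: (xs1 ++ b :: c :: xs2) ++ [xR]) with ((xL :: xs1) ++ b :: c :: (xs2 ++ [xR]))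
          in A, B by (simpl; rewrite <- app_assoc; auto).
      replace (xL :: (xs1 ++ mul b c :: xs2) ++ [xR]) with ((xL :: xs1) ++ mul b c :: (xs2 ++ [xR]))
          by (simpl; rewrite <- app_assoc; auto).
      split; [|split].
      * apply additive_merge; auto.
      * rewrite <- B, wprod_merge; auto.
      * apply Forall_app in C as [C1 C2]. inversion C2; subst. inversion H2; subst.
        apply Forall_app; split; auto. constructor; auto.
        pose proof (additive_infix (xL :: xs1) [b; c] (xs2 ++ [xR]) A) as [F E].
        inversion F; subst. inversion H6; subst.
        unfold wprod in E; simpl in E. rewrite gmul1r in E. unfold nsum in E; simpl in E.
        pose proof (ell_pos b H5 H1). intro Hbc. rewrite Hbc, ell_one in E. lia.
    + apply Forall_app in HF as [F1 F2]. inversion F2; subst. inversion H2; subst.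
      apply Forall_app; auto.
    + apply Sorted_dedup; auto.
  - rewrite !place_assemble. f_equal. apply functional_extensionality; intros r.
    rewrite !factor_at_app by auto. f_equal. rewrite !factor_at_cons. destruct (Req_dec_T s r); auto.
    apply gmulA.
  - unfold cell_point. apply functional_extensionality; intros y. apply gap_weights_merge; auto.
Qed.

Lemma closed_cell_open xL xs xR t : closed_cell xL xs xR t ->
  (forall t0, t <> 0 :: t0) -> (forall t0, t <> t0 ++ [1]) ->
  (forall t1 s t2, t <> t1 ++ s :: s :: t2) ->
  open_cell xL xs xR t.
Proof.
  intros [HL [Ht [HF HS]]] N0 N1 N2. split; [exact HL|]. split; [exact Ht|]. split.
  - apply Forall_open_unit; auto.
  - apply Sorted_Rlt_no_repeat; auto.
Qed.

Lemma closed_cell_reduce xL xs xR t : closed_cell xL xs xR t -> ~ open_cell xL xs xR t ->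
  exists xL' xs' xR' t', closed_cell xL' xs' xR' t' /\ (length xs' < length xs)%nat /\
    place G xL xs xR t = place G xL' xs' xR' t' /\ cell_point xL xs t = cell_point xL' xs' t'.
Proof.
  intros HV Nopen. pose proof HV as [_ [Ht _]].
  destruct (classic (exists t0, t = 0 :: t0)) as [[t0 ->]|N0].
  { destruct xs as [|x xs]; [discriminate|].
    destruct (closed_cell_absorb_left xL x xs xR t0 HV) as [HV' E].
    exists (mul xL x), xs, xR, t0. simpl. auto. }
  destruct (classic (exists t0, t = t0 ++ [1])) as [[t0 ->]|N1].
  { destruct (length_app_split xs t0 [1] (eq_sym Ht)) as [xs0 [[|x [|]] [-> [L1 L2]]]]; try discriminate.
    destruct (closed_cell_absorb_right xL xs0 x xR t0 HV) as [HV' E].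
    exists xL, xs0, (mul x xR), t0. rewrite length_app. simpl. split; [auto|split; [lia|auto]]. }
  destruct (classic (exists t1 s t2, t = t1 ++ s :: s :: t2)) as [[t1 [s [t2 ->]]]|N2].
  { destruct (length_app_split xs t1 (s :: s :: t2) (eq_sym Ht))
      as [xs1 [[|b [|c xs2]] [-> [L1 L2]]]]; try discriminate.
    destruct (closed_cell_merge xL xs1 b c xs2 xR t1 s t2 (eq_sym L1) HV) as [HV' E].
    exists xL, (xs1 ++ mul b c :: xs2), xR, (t1 ++ s :: t2). rewrite !length_app. simpl.
    split; [auto|split; [lia|auto]]. }
  exfalso. apply Nopen, closed_cell_open; auto.
  - intros t0 E. apply N0. eauto.
  - intros t0 E. apply N1. eauto.
  - intros t1 s t2 E. apply N2. eauto.
Qed.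

Lemma closed_cell_normal_form xL xs xR t : closed_cell xL xs xR t ->
  exists xL' xs' xR' t', open_cell xL' xs' xR' t' /\
    place G xL xs xR t = place G xL' xs' xR' t' /\ cell_point xL xs t = cell_point xL' xs' t'.
Proof.
  remember (length xs) as n eqn:En. revert xL xs xR t En.
  induction n as [n IH] using (well_founded_induction Nat.lt_wf_0). intros xL xs xR t En HV.
  destruct (classic (open_cell xL xs xR t)) as [HP|Nopen]; [exists xL, xs, xR, t; auto|].
  destruct (closed_cell_reduce xL xs xR t HV Nopen) as [xL' [xs' [xR' [t' [HV' [Hlt [E1 E2]]]]]]].
  destruct (IH (length xs') ltac:(lia) xL' xs' xR' t' eq_refl HV') as [a [b [c [d [HP [E3 E4]]]]]].
  exists a, b, c, d. split; [exact HP|split; congruence].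
Qed.

Lemma open_cell_gap_weights xL xs xR t : open_cell xL xs xR t ->
  NoDup (map fst (gap_weights xL 0 xs t)) /\ List.Forall (fun p => 0 < snd p) (gap_weights xL 0 xs t) /\
  StronglySorted (fun u v => (len u < len v)%nat) (map fst (gap_weights xL 0 xs t)).
Proof.
  intros HP. pose proof HP as [HL [Ht [HF HS]]].
  rewrite (map_fst_gap_weights xL 0 xs t Ht).
  destruct (lin_fact_additive xL xs xR HL) as [HA _].
  split; [|split].
  - apply (lin_fact_prefixes_chain xL xs xR HL).
  - apply gap_weights_pos; auto. lra.
  - apply prefixes_sorted_ell with (rest := [xR]); auto. apply HL.
Qed.

Lemma open_cell_point_inj xL xs xR t xL' xs' xR' t' : open_cell xL xs xR t -> open_cell xL' xs' xR' t' ->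
  cell_point xL xs t = cell_point xL' xs' t' -> xL = xL' /\ xs = xs' /\ xR = xR' /\ t = t'.
Proof.
  intros H1 H2 E. unfold cell_point in E.
  destruct (open_cell_gap_weights _ _ _ _ H1) as [N1 [F1 S1]].
  destruct (open_cell_gap_weights _ _ _ _ H2) as [N2 [F2 S2]].
  assert (Ef : map fst (gap_weights xL 0 xs t) = map fst (gap_weights xL' 0 xs' t')).
  { apply (StronglySorted_unique (fun u v => (len u < len v)%nat)); auto.
    - intros x; lia.
    - intros x y; lia.
    - intros x. rewrite (in_weight_of_pos _ x N1 F1), (in_weight_of_pos _ x N2 F2), E. tauto. }
  assert (Ec : gap_weights xL 0 xs t = gap_weights xL' 0 xs' t').
  { rewrite (graph_weight_of _ N1), (graph_weight_of _ N2), E, Ef. reflexivity. }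
  destruct H1 as [HL1 [Ht1 _]]. destruct H2 as [HL2 [Ht2 _]].
  destruct (gap_weights_inj _ _ _ _ _ _ _ Ht1 Ht2 Ec) as [A [B C]]. subst xL' xs' t'.
  split; auto. split; auto. split; auto.
  destruct HL1 as [_ [_ [_ [_ [_ P1]]]]]. destruct HL2 as [_ [_ [_ [_ [_ P2]]]]].
  rewrite <- P2 in P1. apply mul_cancel_l in P1. apply mul_cancel_l in P1. exact P1.
Qed.

Lemma open_cell_same_positions xL xs xR t xL' xs' xR' t' : open_cell xL xs xR t ->
  open_cell xL' xs' xR' t' ->
  (forall s, 0 < s < 1 -> place G xL xs xR t s = place G xL' xs' xR' t' s) -> t = t'.
Proof.
  intros H1 H2 E. apply (StronglySorted_unique Rlt).
  - intros x; lra.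
  - intros x y; lra.
  - apply Sorted_StronglySorted; [intros a b c; apply Rlt_trans | apply H1].
  - apply Sorted_StronglySorted; [intros a b c; apply Rlt_trans | apply H2].
  - intros s. rewrite (open_cell_positions _ _ _ _ s H1), (open_cell_positions _ _ _ _ s H2).
    split; intros [Hs N]; split; auto; [rewrite <- E | rewrite E]; auto.
Qed.

Lemma open_cell_place_inj xL xs xR t xL' xs' xR' t' : open_cell xL xs xR t -> open_cell xL' xs' xR' t' ->
  place G xL xs xR t = place G xL' xs' xR' t' -> xL = xL' /\ xs = xs' /\ xR = xR' /\ t = t'.
Proof.
  intros H1 H2 E.
  assert (Et : t = t') by (apply (open_cell_same_positions _ _ _ _ _ _ _ _ H1 H2); intros s _;
      rewrite E; auto).
  subst t'. split; [|split; [|split]]; auto.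
  - rewrite <- (open_cell_place_0 xL xs xR t H1), <- (open_cell_place_0 xL' xs' xR' t H2), E; auto.
  - rewrite <- (open_cell_place_positions xL xs xR t H1),
      <- (open_cell_place_positions xL' xs' xR' t H2), E; auto.
  - rewrite <- (open_cell_place_1 xL xs xR t H1), <- (open_cell_place_1 xL' xs' xR' t H2), E; auto.
Qed.

Lemma closed_cell_point_place xL xs xR t xL' xs' xR' t' : closed_cell xL xs xR t ->
  closed_cell xL' xs' xR' t' ->
  cell_point xL xs t = cell_point xL' xs' t' -> place G xL xs xR t = place G xL' xs' xR' t'.
Proof.
  intros V1 V2 E.
  destruct (closed_cell_normal_form xL xs xR t V1) as [a [b [c [d [P1 [E1 E2]]]]]].
  destruct (closed_cell_normal_form xL' xs' xR' t' V2) as [a' [b' [c' [d' [P2 [E1' E2']]]]]].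
  destruct (open_cell_point_inj a b c d a' b' c' d' P1 P2 ltac:(congruence)) as [-> [-> [-> ->]]].
  congruence.
Qed.

Lemma closed_cell_place_point xL xs xR t xL' xs' xR' t' : closed_cell xL xs xR t ->
  closed_cell xL' xs' xR' t' ->
  place G xL xs xR t = place G xL' xs' xR' t' -> cell_point xL xs t = cell_point xL' xs' t'.
Proof.
  intros V1 V2 E.
  destruct (closed_cell_normal_form xL xs xR t V1) as [a [b [c [d [P1 [E1 E2]]]]]].
  destruct (closed_cell_normal_form xL' xs' xR' t' V2) as [a' [b' [c' [d' [P2 [E1' E2']]]]]].
  destruct (open_cell_place_inj a b c d a' b' c' d' P1 P2 ltac:(congruence)) as [-> [-> [-> ->]]].
  congruence.
Qed.

(** * The correspondence *)

Lemma lsum_carries (p : G -> R) s1 s2 : NoDup s1 -> NoDup s2 -> carries G s1 p -> carries G s2 p ->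
  lsum p s1 = lsum p s2.
Proof.
  intros N1 N2 C1 C2. rewrite (lsum_filter_nonzero p s1), (lsum_filter_nonzero p s2).
  apply lsum_perm. apply NoDup_Permutation; try (apply NoDup_filter; auto).
  intros x. rewrite !filter_In.
  destruct (Req_dec_T (p x) 0); split; intros [A B]; try discriminate; split; auto.
Qed.

Lemma Opt_sum p s : Opt G X g p -> NoDup s -> carries G s p -> lsum p s = 1.
Proof.
  intros [_ [s0 [[N0 _] [C0 S0]]]] N C. rewrite <- S0. apply lsum_carries; auto.
Qed.

Lemma Opt_nonempty p s : Opt G X g p -> carries G s p -> s <> [].
Proof.
  intros HO C E. subst s. destruct HO as [_ [s0 [[N0 _] [C0 S0]]]].
  rewrite (lsum_zero p s0) in S0. lra. intros x _. destruct (Req_dec (p x) 0); auto.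
  exfalso; apply (C x H).
Qed.

Definition corresponds (p : G -> R) (u : R -> G) : Prop :=
  exists xL xs xR t, closed_cell xL xs xR t /\ cell_point xL xs t = p /\ place G xL xs xR t = u.

Lemma corresponds_functional p u u' : corresponds p u -> corresponds p u' -> u = u'.
Proof.
  intros [a [b [c [d [V1 [W1 P1]]]]]] [a' [b' [c' [d' [V2 [W2 P2]]]]]].
  subst. apply closed_cell_point_place; auto; congruence.
Qed.

Lemma corresponds_injective p p' u : corresponds p u -> corresponds p' u -> p = p'.
Proof.
  intros [a [b [c [d [V1 [W1 P1]]]]]] [a' [b' [c' [d' [V2 [W2 P2]]]]]].
  subst. eapply closed_cell_place_point; [exact V1 | exact V2 | congruence].
Qed.

Lemma chain_corresponds c0 rest p : Sorted (lt G X) (c0 :: rest) ->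
  List.Forall (inI G X g) (c0 :: rest) ->
  Opt G X g p -> carries G (c0 :: rest) p ->
  corresponds p
    (place G c0 (quotients (c0 :: rest)) (chain_right c0 rest) (chain_positions p (c0 :: rest))) /\
  closed_cell c0 (quotients (c0 :: rest)) (chain_right c0 rest) (chain_positions p (c0 :: rest)) /\
  cell_point c0 (quotients (c0 :: rest)) (chain_positions p (c0 :: rest)) = p.
Proof.
  intros HS HI HO HC.
  assert (Hs : lsum p (c0 :: rest) = 1) by (apply Opt_sum; auto; apply Sorted_lt_NoDup; auto).
  destruct (chain_closed_cell c0 rest p HS HI (proj1 HO) HC Hs) as [V W].
  split; auto.
  exists c0, (quotients (c0 :: rest)), (chain_right c0 rest), (chain_positions p (c0 :: rest)). auto.
Qed.

Lemma corresponds_total (a : OPoint G X g) : exists u : WPoint G X g,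
  corresponds (proj1_sig a) (proj1_sig u).
Proof.
  destruct a as [p HO]. simpl. pose proof HO as [Hp [s [HCh [HC Hs]]]].
  destruct (chain_sorted_enum s HCh (Opt_nonempty p s HO HC)) as [c0 [rest [P [S I]]]].
  assert (HC' : carries G (c0 :: rest) p) by (intros x Hx; apply (Permutation_in _ P), HC; auto).
  destruct (chain_corresponds c0 rest p S I HO HC') as [_ [V W]].
  destruct (closed_cell_normal_form _ _ _ _ V) as [xL' [xs' [xR' [t' [PC [E1 E2]]]]]].
  exists (exist _ (place G xL' xs' xR' t') (open_cell_WF _ _ _ _ PC)). simpl.
  exists xL', xs', xR', t'. split. apply open_closed_cell; auto. split; auto. congruence.
Qed.

Lemma corresponds_onto (u : WPoint G X g) : exists a : OPoint G X g,
  corresponds (proj1_sig a) (proj1_sig u).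
Proof.
  destruct u as [u HW]. simpl. destruct (WF_open_cell u HW) as [ss [PC E]].
  pose proof (closed_cell_Opt _ _ _ _ (open_closed_cell _ _ _ _ PC)) as HO.
  exists (exist _ _ HO). simpl. exists (u 0), (map u ss), (u 1), ss. split; auto.
  apply open_closed_cell; auto.
Qed.

Definition to_wpoint (a : OPoint G X g) : WPoint G X g :=
  proj1_sig (constructive_indefinite_description _ (corresponds_total a)).

Definition to_opoint (u : WPoint G X g) : OPoint G X g :=
  proj1_sig (constructive_indefinite_description _ (corresponds_onto u)).

Lemma to_wpoint_spec a : corresponds (proj1_sig a) (proj1_sig (to_wpoint a)).
Proof. unfold to_wpoint. destruct (constructive_indefinite_description _ _); auto. Qed.

Lemma to_opoint_spec u : corresponds (proj1_sig (to_opoint u)) (proj1_sig u).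
Proof. unfold to_opoint. destruct (constructive_indefinite_description _ _); auto. Qed.

Lemma to_opoint_to_wpoint a : to_opoint (to_wpoint a) = a.
Proof.
  pose proof (corresponds_injective _ _ _ (to_opoint_spec (to_wpoint a)) (to_wpoint_spec a)) as E.
  destruct (to_opoint (to_wpoint a)) as [p Hp], a as [q Hq]. simpl in E. subst.
  f_equal. apply proof_irrelevance.
Qed.

Lemma to_wpoint_to_opoint u : to_wpoint (to_opoint u) = u.
Proof.
  pose proof (corresponds_functional _ _ _ (to_wpoint_spec (to_opoint u)) (to_opoint_spec u)) as E.
  destruct (to_wpoint (to_opoint u)) as [p Hp], u as [q Hq]. simpl in E. subst.
  f_equal. apply proof_irrelevance.
Qed.

Lemma kident_cell_points (a b : OPoint G X g) xL xL' xs xR xR' t :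
  closed_cell xL xs xR t -> closed_cell xL' xs xR' t ->
  proj1_sig a = cell_point xL xs t -> proj1_sig b = cell_point xL' xs t -> kident a b.
Proof.
  intros V V' Ea Eb. exists (prefixes xL xs), (prefixes xL' xs). rewrite Ea, Eb.
  split; [apply (lin_fact_strict_chain _ _ xR), V|]. split; [apply (lin_fact_strict_chain _ _ xR'), V'|].
  split; [rewrite !length_prefixes; auto|]. split.
  { intros i Hi. rewrite length_prefixes in Hi. rewrite !nth_prefixes by lia.
    rewrite !inv_mul_cancel. reflexivity. }
  split; [exact (closed_cell_carries _ _ _ _ V)|]. split; [exact (closed_cell_carries _ _ _ _ V')|].
  intros i Hi. rewrite length_prefixes in Hi.
  rewrite (cell_point_nth _ _ _ _ i V), (cell_point_nth _ _ _ _ i V') by lia.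
  rewrite (map_snd_gap_weights xL xL'). reflexivity.
Qed.

Lemma ostep_to_wpoint a b r : ostep a b r -> wstep (to_wpoint a) (to_wpoint b) r.
Proof.
  destruct a as [p Hp], b as [q Hq]. intros [s [HCh [Cp [Cq Er]]]]. simpl in *.
  destruct (chain_sorted_enum s HCh (Opt_nonempty p s Hp Cp)) as [c0 [rest [P [S I]]]].
  assert (Cp' : carries G (c0 :: rest) p) by (intros x Hx; apply (Permutation_in _ P), Cp; auto).
  assert (Cq' : carries G (c0 :: rest) q) by (intros x Hx; apply (Permutation_in _ P), Cq; auto).
  destruct (chain_corresponds c0 rest p S I Hp Cp') as [R1 [V1 W1]].
  destruct (chain_corresponds c0 rest q S I Hq Cq') as [R2 [V2 W2]].
  pose proof (corresponds_functional _ _ _ (to_wpoint_spec (exist _ p Hp)) R1) as E1.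
  pose proof (corresponds_functional _ _ _ (to_wpoint_spec (exist _ q Hq)) R2) as E2. simpl in E1, E2.
  exists c0, (quotients (c0 :: rest)), (chain_right c0 rest), (chain_positions p (c0 :: rest)),
      (chain_positions q (c0 :: rest)).
  split; [apply V1|]. split; [apply positions_iff; apply V1|]. split; [apply positions_iff; apply V2|].
  split; [exact E1|]. split; [exact E2|].
  rewrite (edist_wcoords_ocoord _ _ _ _ _ V1 V2). rewrite prefixes_quotients, W1, W2. rewrite Er.
  f_equal.
  apply lsum_ext_in. intros j _. unfold ocoord. rewrite (lsum_perm _ _ _ P), (lsum_perm _ _ _ P).
  reflexivity.
Qed.

Lemma kident_to_wpoint a b : kident a b -> wident (to_wpoint a) (to_wpoint b).
Proof.
  intros [c [d [Sc [Sd [Hl [Hq_ [Cc [Cd Hw]]]]]]]].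
  pose proof (proj2_sig a) as Hp. pose proof (proj2_sig b) as Hq. simpl in Hp, Hq.
  set (p := proj1_sig a) in *. set (q := proj1_sig b) in *.
  destruct c as [|c0 rc]. exfalso; apply (Opt_nonempty p [] Hp Cc); auto.
  destruct d as [|d0 rd]. simpl in Hl; lia.
  assert (SLc : Sorted (lt G X) (c0 :: rc)) by (apply (Sorted_nth_iff _ _ one), Sc).
  assert (SLd : Sorted (lt G X) (d0 :: rd)) by (apply (Sorted_nth_iff _ _ one), Sd).
  destruct (chain_corresponds c0 rc p SLc (proj1 Sc) Hp Cc) as [R1 [V1 W1]].
  destruct (chain_corresponds d0 rd q SLd (proj1 Sd) Hq Cd) as [R2 [V2 W2]].
  pose proof (corresponds_functional _ _ _ (to_wpoint_spec a) R1) as E1.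
  pose proof (corresponds_functional _ _ _ (to_wpoint_spec b) R2) as E2.
  intros s Hs. rewrite E1, E2, !place_assemble, !assemble_inner by auto.
  assert (Eq : quotients (c0 :: rc) = quotients (d0 :: rd)).
  { apply nth_ext with (d := one) (d' := one). rewrite !length_quotients. simpl in Hl; lia.
    intros i Hi. rewrite length_quotients in Hi. rewrite !nth_quotients by (simpl in *; lia). apply Hq_.
    simpl; lia. }
  assert (Em : map p (c0 :: rc) = map q (d0 :: rd)).
  { apply nth_ext with (d := 0) (d' := 0). rewrite !length_map; auto.
    intros i Hi. rewrite length_map in Hi.
    rewrite (nth_indep _ 0 (p one)), map_nth by (rewrite length_map; auto).
    rewrite (nth_indep _ 0 (q one)), map_nth by (rewrite length_map; lia). apply Hw; auto. }
  rewrite Eq, Em. reflexivity.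
Qed.

Lemma wstep_to_opoint u v r : wstep u v r -> ostep (to_opoint u) (to_opoint v) r.
Proof.
  intros [xL [xs [xR [t [t' [HL [Pt [Pt' [Eu [Ev Er]]]]]]]]]].
  assert (V1 : closed_cell xL xs xR t) by (split; auto; apply positions_iff; auto).
  assert (V2 : closed_cell xL xs xR t') by (split; auto; apply positions_iff; auto).
  assert (R1 : corresponds (cell_point xL xs t) (proj1_sig u)) by (exists xL, xs, xR, t; auto).
  assert (R2 : corresponds (cell_point xL xs t') (proj1_sig v)) by (exists xL, xs, xR, t'; auto).
  pose proof (corresponds_injective _ _ _ (to_opoint_spec u) R1) as E1.
  pose proof (corresponds_injective _ _ _ (to_opoint_spec v) R2) as E2.
  exists (prefixes xL xs). rewrite E1, E2. split; [apply (lin_fact_prefixes_chain xL xs xR HL)|].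
  split; [apply (closed_cell_carries _ _ _ _ V1)|]. split; [apply (closed_cell_carries _ _ _ _ V2)|].
  rewrite Er. apply edist_wcoords_ocoord; auto.
Qed.

Lemma wident_to_opoint u v : wident u v -> kident (to_opoint u) (to_opoint v).
Proof.
  intros Hw. unfold wident in Hw.
  destruct (WF_open_cell (proj1_sig u) (proj2_sig u)) as [ss [PCu Eu]].
  destruct (WF_open_cell (proj1_sig v) (proj2_sig v)) as [ss' [PCv Ev]].
  set (uu := proj1_sig u) in *. set (vv := proj1_sig v) in *.
  assert (Es : ss = ss').
  { apply (open_cell_same_positions _ _ _ _ _ _ _ _ PCu PCv). intros s Hs. rewrite Eu, Ev.
      apply Hw, Hs. }
  subst ss'.
  assert (Emap : map uu ss = map vv ss).
  { apply map_ext_in. intros s Hs. apply Hw. destruct PCu as [_ [_ [Fa _]]].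
      rewrite Forall_forall in Fa; auto. }
  rewrite Emap in PCu, Eu.
  assert (R1 : corresponds (cell_point (uu 0) (map vv ss) ss) uu).
  { exists (uu 0), (map vv ss), (uu 1), ss. split; auto. apply open_closed_cell; auto. }
  assert (R2 : corresponds (cell_point (vv 0) (map vv ss) ss) vv).
  { exists (vv 0), (map vv ss), (vv 1), ss. split; auto. apply open_closed_cell; auto. }
  apply (kident_cell_points _ _ (uu 0) (vv 0) (map vv ss) (uu 1) (vv 1) ss);
    [apply open_closed_cell; auto | apply open_closed_cell; auto | |].
  - exact (corresponds_injective _ _ _ (to_opoint_spec u) R1).
  - exact (corresponds_injective _ _ _ (to_opoint_spec v) R2).
Qed.

Lemma WS_dist_to_wpoint a a' : WS_dist (to_wpoint a) (to_wpoint a') = K_dist a a'.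
Proof.
  apply (qdist_transport _ _ _ _ to_wpoint to_opoint to_opoint_to_wpoint
           ostep_to_wpoint kident_to_wpoint wstep_to_opoint wident_to_opoint).
Qed.

Lemma wstep_nonneg u v r : @wstep G X g u v r -> 0 <= r.
Proof. intros [xL [xs [xR [t [t' [_ [_ [_ [_ [_ ->]]]]]]]]]]. apply sqrt_pos. Qed.

End Correspondence.

Theorem proposition4p10 (G : group) (X : G -> Prop) (g : G) :
  generates G X -> conj_closed G X -> Mon G X g ->
  isometric (@K_dist G X g) (@WS_dist G X g).
Proof.
  intros _ _ _. exists (to_wpoint G X g). split.
  - apply WS_dist_to_wpoint.
  - intros u. exists (to_opoint G X g u). rewrite to_wpoint_to_opoint.
    apply qdist_self, wstep_nonneg.
Qed.
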